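(* For every integer $g\ge1$ there exists a polyhedral map $P$ of genus $g$ such that truncation increases the symmetry of $P$, i.e. $|\mathrm{Aut}(T(P))|>|\mathrm{Aut}(P)|$.
   Context: A polyhedral map is a 3-connected graph embedded in a closed orientable surface such that every face is an open disc and the closures of any two faces have connected intersection; its genus is that of the surface; $\mathrm{Aut}(P)$ is its automorphism group. The truncation $T(P)$ has one vertex $(v,e)$ for every pair of a vertex $v$ and an incident edge $e$ of $P$; for each edge $e=vw$, $(v,e)$ and $(w,e)$ are adjacent, and $(v,e),(v,e')$ are adjacent whenever $e,e'$ are consecutive around $v$ (each vertex of degree $d$ becomes a face of size $d$, each face of size $k$ becomes a face of size $2k$). Every automorphism of $P$ induces an automorphism of $T(P)$, so $|\mathrm{Aut}(P)|\le|\mathrm{Aut}(T(P))|$. *)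

From mathcomp Require Import all_boot all_order all_algebra all_fingroup.
Set Implicit Arguments. Unset Strict Implicit. Unset Printing Implicit Defensive.
Import GRing.Theory Num.Theory.

(* Maps on closed surfaces are encoded combinatorially by their flag systems:
   a finite set D of flags with three fixed-point-free involutions r0 r1 r2
   (r0 changes the vertex, r1 the edge, r2 the face of a flag), r0 r2 a
   fixed-point-free involution, and the flag graph connected. *)

Section Maps.
Variable D : finType.
Variables r0 r1 r2 : D -> D.

Definition fpf_involution (r : D -> D) : Prop := forall x, r (r x) = x /\ r x != x.

Definition flag_rel : rel D := fun x y => (y == r0 x) || (y == r1 x) || (y == r2 x).

Definition is_map : Prop :=
  [/\ (0 < #|D|)%N, fpf_involution r0 /\ fpf_involution r1 /\ fpf_involution r2,
      (forall x, r0 (r2 x) = r2 (r0 x) /\ r0 (r2 x) != x)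
    & forall x y, connect flag_rel x y].

Definition orientable : Prop :=
  exists c : D -> bool, forall x,
    [/\ c (r0 x) = ~~ c x, c (r1 x) = ~~ c x & c (r2 x) = ~~ c x].

Definition vrel : rel D := fun x y => (y == r1 x) || (y == r2 x).
Definition erel : rel D := fun x y => (y == r0 x) || (y == r2 x).
Definition frel : rel D := fun x y => (y == r0 x) || (y == r1 x).

Definition vcls (x : D) : {set D} := [set y | connect vrel x y].
Definition ecls (x : D) : {set D} := [set y | connect erel x y].
Definition fcls (x : D) : {set D} := [set y | connect frel x y].

Definition verts : {set {set D}} := [set vcls x | x : D].
Definition edges : {set {set D}} := [set ecls x | x : D].
Definition faces : {set {set D}} := [set fcls x | x : D].

Definition euler_char : int := (#|verts|%:Z - #|edges|%:Z + #|faces|%:Z)%R.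

Definition has_genus (g : nat) : Prop :=
  orientable /\ euler_char = (2 - 2 * g%:Z)%R.

Definition adj (u w : {set D}) : bool :=
  (u != w) && [exists x, (x \in u) && (r0 x \in w)].

Definition simple_graph : Prop :=
  (forall x, vcls (r0 x) != vcls x) /\
  (forall x y, vcls x = vcls y -> vcls (r0 x) = vcls (r0 y) -> ecls x = ecls y).

Definition three_connected : Prop :=
  (4 <= #|verts|)%N /\
  forall S : {set {set D}}, (#|S| <= 2)%N ->
    {in verts :\: S &, forall u w,
      connect (fun a b => [&& a \in verts :\: S, b \in verts :\: S & adj a b]) u w}.

(* closures of two distinct faces meet in a connected set: the common vertices
   and common edges form a connected (possibly empty) subgraph *)
Definition faces_meet_connected : Prop :=
  forall x y, fcls x != fcls y ->
    let CV := [set v in verts | (v :&: fcls x != set0) && (v :&: fcls y != set0)] in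
    let CE := [set e in edges | (e :&: fcls x != set0) && (e :&: fcls y != set0)] in
    {in CV &, forall u w,
      connect (fun a b => [&& a \in CV, b \in CV &
                 [exists e in CE, exists z in e, (z \in a) && (r0 z \in b)]]) u w}.

Definition polyhedral_map : Prop :=
  [/\ is_map, simple_graph, three_connected & faces_meet_connected].

Definition map_aut : {set {perm D}} :=
  [set p : {perm D} | [forall x, [&& p (r0 x) == r0 (p x),
                                     p (r1 x) == r1 (p x) & p (r2 x) == r2 (p x)]]].

(* For a flag F = (v,e,f) of P:
   (F,0) = ((v,e), edge (v,e)-(w,e), face f),
   (F,1) = ((v,e), edge (v,e)-(v,e') at the corner (v,f), face f),
   (F,2) = ((v,e), edge (v,e)-(v,e') at the corner (v,f), face of v). *)
Definition trunc_r0 (z : D * 'I_3) : D * 'I_3 :=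
  let: (x, i) := z in if val i == 0%N then (r0 x, i) else (r1 x, i).
Definition trunc_r1 (z : D * 'I_3) : D * 'I_3 :=
  let: (x, i) := z in
  if val i == 0%N then (x, inord 1) else if val i == 1%N then (x, inord 0)
  else (r2 x, i).
Definition trunc_r2 (z : D * 'I_3) : D * 'I_3 :=
  let: (x, i) := z in
  if val i == 0%N then (r2 x, i) else if val i == 1%N then (x, inord 2)
  else (x, inord 1).

End Maps.

From mathcomp Require Import all_boot all_order all_algebra all_fingroup.
From mathcomp Require Import zify.
Set Implicit Arguments. Unset Strict Implicit. Unset Printing Implicit Defensive.
Import GRing.Theory Num.Theory.

(* For g = n + 1 take the (n+1)-sheeted cyclic cover P of the seven-vertex triangulation K7 of
   the torus, branched over a vertex (the hub) and a triangle not incident with it (the branch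
   face): integer voltages on the flags of K7 have net value 1 around the hub and the branch face
   and 0 around every other vertex and face.  The hub and the branch face lift to a single vertex
   and a single face, every other vertex, edge and face to n + 1 copies, so the Euler
   characteristic of P is (1 + 6(n+1)) - 21(n+1) + (1 + 13(n+1)) = 2 - 2g.
   P is polyhedral: the hub is adjacent to every other vertex, and the remaining vertices form a
   cyclic chain of n + 1 copies of K6 minus the edge 13, the vertex 1 of each copy being joined to
   the vertex 3 of the next, so deleting one of them leaves a connected graph; two faces with two
   common vertices share the edge joining them, because this holds in K7.
   All faces of the truncation T(K7) are hexagons, and T(K7) has a symmetry that reverses every
   voltage and moves some flag of T(K7) to a flag of another type.  Together with the negation of
   the sheet it lifts to an automorphism of T(P), which is induced by no automorphism of P since
   those preserve the type of every flag. *)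

(** * Flag graphs and truncations *)

Section Components.
Variable T : finType.

Lemma connect_label (L : eqType) (lab : T -> L) (e : rel T) :
  (forall x y, e x y -> lab x = lab y) -> forall x y, connect e x y -> lab x = lab y.
Proof.
move=> lab_e x y xy; apply/esym/eqP.
have cl : closed e [pred z | lab z == lab x] by move=> z t /lab_e ezt; rewrite !inE ezt.
by rewrite -[_ == _]/(y \in [pred z | lab z == lab x]) -(closed_connect cl xy) inE.
Qed.

Lemma connect_homo (U : finType) (e : rel T) (e' : rel U) (f : T -> U) :
  {homo f : x y / e x y >-> e' x y} -> {homo f : x y / connect e x y >-> connect e' x y}.
Proof.
move=> f_e x _ /connectP[p + ->]; elim: p x => [|y p IHp] x //= /andP[/f_e exy /IHp].
exact: connect_trans (connect1 exy).
Qed.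

Lemma card_classes (L : finType) (cls : T -> {set T}) (lab : T -> L) :
  (forall x y, (y \in cls x) = (lab x == lab y)) ->
  #|[set cls x | x : T]| = #|[set lab x | x : T]|.
Proof.
move=> mem_cls; pose fibre l := [set y | lab y == l].
have -> : [set cls x | x : T] = fibre @: [set lab x | x : T].
  rewrite -imset_comp; apply: eq_imset => x /=.
  by apply/setP => y; rewrite mem_cls inE eq_sym.
apply: card_in_imset => _ _ /imsetP[x _ ->] /imsetP[y _ ->] /setP/(_ x).
by rewrite !inE eqxx => /esym/eqP.
Qed.

Lemma cls_eqE (L : eqType) (cls : T -> {set T}) (lab : T -> L) :
  (forall x y, (y \in cls x) = (lab x == lab y)) ->
  forall x y, (cls x == cls y) = (lab x == lab y).
Proof.
move=> mem_cls x y; apply/eqP/eqP => [cxy|lxy]; last by apply/setP => z; rewrite !mem_cls lxy.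
by apply/eqP; rewrite -mem_cls cxy mem_cls.
Qed.

End Components.

Section TruncationSymmetry.
Variables (D : finType) (r0 r1 r2 : D -> D).
Local Notation aut_trunc := (map_aut (trunc_r0 r0 r1) (trunc_r1 r2) (trunc_r2 r2)).

Definition trunc_lift_fun (p : {perm D}) (z : D * 'I_3) := (p z.1, z.2).

Lemma trunc_lift_fun_inj p : injective (trunc_lift_fun p).
Proof. by move=> [x i] [y j] [/perm_inj -> ->]. Qed.

Definition trunc_lift p : {perm D * 'I_3} := perm (@trunc_lift_fun_inj p).

Lemma trunc_lift_aut p : p \in map_aut r0 r1 r2 -> trunc_lift p \in aut_trunc.
Proof.
rewrite !inE => /forallP p_aut; apply/forallP => -[x i].
case/and3P: (p_aut x) => /eqP p0 /eqP p1 /eqP p2.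
by case: i => [[|[|[|]]] ?] //; rewrite !permE /trunc_lift_fun /= ?p0 ?p1 ?p2 !eqxx.
Qed.

Lemma trunc_lift_inj : injective trunc_lift.
Proof.
move=> p q /permP epq; apply/permP => x.
by have := epq (x, ord0); rewrite !permE => -[].
Qed.

(* Automorphisms of P act on T(P) without changing the type [z.2] of a flag [z]. *)
Lemma card_map_aut_lt_trunc (s : {perm D * 'I_3}) z :
  s \in aut_trunc -> (s z).2 != z.2 -> #|map_aut r0 r1 r2| < #|aut_trunc|.
Proof.
move=> s_aut s_z; rewrite -(card_imset _ trunc_lift_inj).
apply: proper_card; apply/properP; split.
  by apply/subsetP => _ /imsetP[p p_aut ->]; exact: trunc_lift_aut.
by exists s => //; apply/imsetP => -[p _ spz]; rewrite spz permE eqxx in s_z.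
Qed.

End TruncationSymmetry.

(** * Cyclic voltage covers *)

Section Sheets.
Variable n : nat.

Definition zp (z : int) : 'I_n.+1 := (Zp1 *~ z)%R.

Lemma zpD x y : zp (x + y) = (zp x + zp y)%R. Proof. exact: mulrzDr. Qed.
Lemma zpN x : zp (- x) = (- zp x)%R. Proof. exact: mulrNz. Qed.
Lemma zp0 : zp 0 = 0%R. Proof. by []. Qed.

Lemma val_zp (m : nat) : zp m = m %% n.+1 :> nat.
Proof. by rewrite /zp -pmulrn Zp_mulrn /= modnMml mul1n. Qed.

Lemma zp_val (k : 'I_n.+1) : zp k = k.
Proof. by apply: val_inj; rewrite /= val_zp modn_small. Qed.

Lemma zp_neq0 (m : nat) : 0 < m < n.+1 -> zp m != 0%R.
Proof. by case/andP=> m_gt0 m_lt; rewrite -val_eqE /= val_zp modn_small // -lt0n. Qed.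

End Sheets.
Arguments zp {n}.

Section VoltageCover.
Variables (n : nat) (B : finType) (step : nat -> B -> B) (volt : nat -> B -> int).
Local Notation D := ('I_n.+1 * B)%type.

Definition cover_step i (x : D) : D := (x.1 + zp (volt i x.2), step i x.2)%R.

Lemma cover_stepE i k a : cover_step i (k, a) = (k + zp (volt i a), step i a)%R.
Proof. by []. Qed.

Lemma cover_stepK i :
  (forall a, step i (step i a) = a) -> (forall a, volt i (step i a) = - volt i a)%R ->
  involutive (cover_step i).
Proof. by move=> stepK voltN [k a]; rewrite /cover_step /= voltN zpN addrK stepK. Qed.

Lemma cover_step_fpf i x : step i x.2 != x.2 -> cover_step i x != x.
Proof. by apply: contra => /eqP/(congr1 snd) /= ->. Qed.

Lemma cover_step02 x :
  step 0 (step 2 x.2) = step 2 (step 0 x.2) ->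
  (volt 2 x.2 + volt 0 (step 2 x.2) = volt 0 x.2 + volt 2 (step 0 x.2))%R ->
  cover_step 0 (cover_step 2 x) = cover_step 2 (cover_step 0 x).
Proof. by case: x => k a /= step02 volt02; rewrite /cover_step /= -!addrA -!zpD volt02 step02. Qed.

Lemma cover_orientable (col : B -> bool) :
  (forall i a, i < 3 -> col (step i a) = ~~ col a) ->
  orientable (cover_step 0) (cover_step 1) (cover_step 2).
Proof. by move=> col_step; exists (fun x => col x.2) => x; split; apply: col_step. Qed.

Definition base_walk (w : seq nat) (a : B) : B := foldl (fun a i => step i a) a w.

Fixpoint walk_volt (w : seq nat) (a : B) : int :=
  if w is i :: w' then (volt i a + walk_volt w' (step i a))%R else 0%R.

Definition cover_walk (w : seq nat) (x : D) : D := foldl (fun x i => cover_step i x) x w.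

Lemma cover_walkE w k a : cover_walk w (k, a) = (k + zp (walk_volt w a), base_walk w a)%R.
Proof.
elim: w k a => [|i w IHw] k a /=; first by rewrite addr0.
by rewrite IHw zpD addrA.
Qed.

Section WalkConnect.
Variables (e : rel D) (s : seq nat).
Hypothesis e_step : forall i x, i \in s -> e x (cover_step i x).

Lemma connect_cover_walk w x : {subset w <= s} -> connect e x (cover_walk w x).
Proof.
elim: w x => [|i w IHw] x w_s /=; first exact: connect0.
apply: connect_trans (connect1 (e_step _ (w_s i (mem_head _ _)))) (IHw _ _).
by move=> h hw; apply: w_s; rewrite inE hw orbT.
Qed.

Lemma connect_fibre w c :
  {subset w <= s} -> base_walk w c = c -> walk_volt w c = 1%R ->
  forall k k', connect e (k, c) (k', c).
Proof.
move=> w_s wc w1.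
have step1 k : connect e (k, c) (k + zp 1, c)%R.
  by have := connect_cover_walk (k, c) w_s; rewrite cover_walkE wc w1.
have stepm (m : nat) k : connect e (k, c) (k + zp m, c)%R.
  elim: m k => [|m IHm] k; first by rewrite zp0 addr0 connect0.
  by rewrite -[m.+1]addn1 PoszD zpD addrA; exact: connect_trans (IHm k) (step1 _).
by move=> k k'; have := stepm (k' - k)%R k; rewrite zp_val addrC subrK.
Qed.

End WalkConnect.

Lemma cover_connected (root : B) (word : B -> seq nat) (loop : seq nat) :
  (forall i, i < 3 -> involutive (cover_step i)) ->
  (forall a, {subset word a <= [:: 0; 1; 2]}) -> (forall a, base_walk (word a) a = root) ->
  {subset loop <= [:: 0; 1; 2]} -> base_walk loop root = root -> walk_volt loop root = 1%R ->
  forall x y, connect (flag_rel (cover_step 0) (cover_step 1) (cover_step 2)) x y.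
Proof.
move=> stepK word_s word_root loop_s loop_root loop1.
set e := flag_rel _ _ _.
have e_step i x : i \in [:: 0; 1; 2] -> e x (cover_step i x).
  by rewrite !inE => /or3P[] /eqP->; rewrite /e /flag_rel eqxx ?orbT.
have e_sym : symmetric e.
  by move=> x y; rewrite /e /flag_rel !(eq_sym y) !(inv_eq (stepK _ _)).
have to_root x : connect e x (0, root)%R.
  have := connect_cover_walk e_step x (word_s x.2).
  case: x => k a; rewrite cover_walkE word_root => /connect_trans; apply.
  exact: (connect_fibre e_step loop_s loop_root loop1).
move=> x y; apply: connect_trans (to_root x) _.
by rewrite (sym_connect_sym e_sym) to_root.
Qed.

Section Orbits.
Variables (i j : nat) (C : finType) (cls : B -> C) (branched : pred C) (pot : B -> int).
Local Notation orbit := (vcls (cover_step i) (cover_step j)).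
Local Notation orbit_rel := (vrel (cover_step i) (cover_step j)).

(* Over a branched class the orbits of <r_i, r_j> on the cover merge into one; over an unbranched
   class there is one orbit per sheet, the sheet being read relative to the potential [pot]. *)
Definition orbit_label (x : D) : C + 'I_n.+1 * C :=
  if branched (cls x.2) then inl (cls x.2) else inr (x.1 - zp (pot x.2), cls x.2)%R.

Lemma orbit_label_cls x y : orbit_label x = orbit_label y -> cls x.2 = cls y.2.
Proof. by rewrite /orbit_label; do 2![case: ifP] => _ _ // => -[]. Qed.

Lemma orbit_label_sheet x y : orbit_label x = orbit_label y -> ~~ branched (cls x.2) ->
  (x.1 - zp (pot x.2) = y.1 - zp (pot y.2))%R.
Proof.
move=> lxy unbr; move: lxy (orbit_label_cls lxy); rewrite /orbit_label => + cxy.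
by rewrite -cxy (negbTE unbr) => /(congr1 (fun l => if l is inr p then p.1 else 0%R)).
Qed.

Variables (flag : C -> B) (word : B -> seq nat) (loop : C -> seq nat).
Hypothesis flagK : cancel flag cls.
Hypothesis pot_flag : forall c, pot (flag c) = 0%R.

Lemma orbit_label_flag k c :
  orbit_label (k, flag c) = if branched c then inl c else inr (k, c).
Proof. by rewrite /orbit_label /= flagK pot_flag subr0. Qed.

Lemma card_orbits :
  (forall x y, (y \in orbit x) = (orbit_label x == orbit_label y)) ->
  #|[set orbit x | x : D]| = #|branched| + n.+1 * #|predC branched|.
Proof.
move=> mem_orbit; rewrite (card_classes mem_orbit).
pose P := [set p : 'I_n.+1 * C | ~~ branched p.2].
have -> : [set orbit_label x | x : D] = inl @: [set c | branched c] :|: inr @: P.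
  apply/setP => l; rewrite inE; apply/imsetP/orP => [[x _ ->]|].
    rewrite /orbit_label; case: ifP => br; [left|right]; apply: imset_f; by rewrite inE ?br.
  case=> [/imsetP[c] | /imsetP[[k c]]]; rewrite inE => br ->.
    by exists (0%R, flag c); rewrite // orbit_label_flag br.
  by exists (k, flag c); rewrite // orbit_label_flag (negbTE br).
have inl_inj : injective (@inl C ('I_n.+1 * C)) by move=> ? ? [].
have inr_inj : injective (@inr C ('I_n.+1 * C)) by move=> ? ? [].
have disj : inl @: [set c | branched c] :&: inr @: P = set0.
  apply/setP => -[c|p]; rewrite !inE; apply/negbTE/andP.
    by case=> _ /imsetP[? _ //].
  by case=> /imsetP[? _ //].
apply/eqP; rewrite -(eqn_add2r #|inl @: [set c | branched c] :&: inr @: P|) cardsUI disj cards0.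
rewrite addn0 !card_imset // cardsE; apply/eqP; congr (_ + _).
have -> : P = setX [set: 'I_n.+1] [set c | ~~ branched c] by apply/setP => -[k c]; rewrite !inE.
by rewrite cardsX cardsT card_ord cardsE.
Qed.

Hypothesis step_invol : forall h, h \in [:: i; j] -> involutive (cover_step h).
Hypothesis cls_step : forall h a, h \in [:: i; j] -> cls (step h a) = cls a.
Hypothesis pot_step : forall h a, h \in [:: i; j] -> ~~ branched (cls a) ->
  pot (step h a) = (pot a + volt h a)%R.

Lemma orbit_label_step h x : h \in [:: i; j] -> orbit_label (cover_step h x) = orbit_label x.
Proof.
case: x => k a h_ij; rewrite /orbit_label /= cls_step //.
by case: ifP => // /negbT unbr; rewrite pot_step // zpD (addrC (zp (pot a))) opprD addrA addrK.
Qed.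

Hypothesis word_sub : forall a, {subset word a <= [:: i; j]}.
Hypothesis word_flag : forall a, base_walk (word a) a = flag (cls a).
Hypothesis loop_sub : forall c, branched c -> {subset loop c <= [:: i; j]}.
Hypothesis loop_closed : forall c, branched c -> base_walk (loop c) (flag c) = flag c.
Hypothesis loop_volt : forall c, branched c -> walk_volt (loop c) (flag c) = 1%R.

Lemma orbit_rel_step h x : h \in [:: i; j] -> orbit_rel x (cover_step h x).
Proof. by rewrite !inE => /orP[] /eqP->; rewrite /vrel eqxx ?orbT. Qed.

Lemma mem_orbit x y : (y \in orbit x) = (orbit_label x == orbit_label y).
Proof.
have i_ij : i \in [:: i; j] by rewrite mem_head.
have j_ij : j \in [:: i; j] by rewrite !inE eqxx orbT.
have rel_sym : symmetric orbit_rel.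
  by move=> u v; rewrite /vrel !(eq_sym v) (inv_eq (step_invol i_ij)) (inv_eq (step_invol j_ij)).
have label_rel u v : orbit_rel u v -> orbit_label u = orbit_label v.
  by case/orP=> /eqP->; rewrite orbit_label_step.
have to_flag u : connect orbit_rel u (u.1 + zp (walk_volt (word u.2) u.2), flag (cls u.2))%R.
  case: u => k a /=; rewrite -word_flag -cover_walkE.
  exact: (connect_cover_walk orbit_rel_step _ (@word_sub a)).
rewrite inE; apply/idP/eqP => [|lab_xy]; first exact: connect_label.
have := to_flag x; have := to_flag y; rewrite -(orbit_label_cls lab_xy).
set c := cls x.2; set kx := (x.1 + _)%R; set ky := (y.1 + _)%R => y_ky x_kx.
suff kx_ky : connect orbit_rel (kx, flag c) (ky, flag c).
  by apply: connect_trans x_kx (connect_trans kx_ky _); rewrite (sym_connect_sym rel_sym).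
have [br_c|unbr_c] := boolP (branched c).
  exact: (connect_fibre orbit_rel_step (loop_sub br_c) (loop_closed br_c) (loop_volt br_c)).
have lab_kx := connect_label label_rel x_kx; have lab_ky := connect_label label_rel y_ky.
have : orbit_label (kx, flag c) = orbit_label (ky, flag c) by rewrite -lab_kx -lab_ky.
rewrite !orbit_label_flag (negbTE unbr_c).
by move=> /(congr1 (fun l => if l is inr p then p.1 else kx)) /= ->; exact: connect0.
Qed.

End Orbits.
End VoltageCover.

Definition trunc_step (D : finType) (r : nat -> D -> D) (j : nat) : D * 'I_3 -> D * 'I_3 :=
  if j == 0 then trunc_r0 (r 0) (r 1) else if j == 1 then trunc_r1 (r 2) else trunc_r2 (r 2).

Section TruncatedCover.
Variables (n : nat) (B : finType) (step : nat -> B -> B) (volt : nat -> B -> int).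
Local Notation D := ('I_n.+1 * B)%type.
Local Notation r := (cover_step step volt).

(* The voltage of [trunc_step r j] at [(a, i)]: that of the step of [r] it performs, if any. *)
Definition trunc_volt (j : nat) (y : B * 'I_3) : int :=
  match j, val y.2 with
  | 0, 0 => volt 0 y.1 | 0, _ => volt 1 y.1
  | 1, 2 => volt 2 y.1 | 2, 0 => volt 2 y.1
  | _, _ => 0
  end.

Definition cover_assoc (z : D * 'I_3) : 'I_n.+1 * (B * 'I_3) := (z.1.1, (z.1.2, z.2)).
Definition cover_unassoc (x : 'I_n.+1 * (B * 'I_3)) : D * 'I_3 := ((x.1, x.2.1), x.2.2).

Lemma cover_assocK : cancel cover_assoc cover_unassoc. Proof. by case=> [[]]. Qed.
Lemma cover_unassocK : cancel cover_unassoc cover_assoc. Proof. by case=> ? []. Qed.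

Lemma trunc_cover_step j z : j < 3 ->
  cover_assoc (trunc_step r j z) = cover_step (trunc_step step) trunc_volt j (cover_assoc z).
Proof.
case: z => [[k a] [[|[|[|i]]] i_lt]] //;
by case: j => [|[|[|j]]] //= _; rewrite /cover_step /trunc_volt /= ?zp0 ?addr0.
Qed.

Definition cover_flip (tau : B * 'I_3 -> B * 'I_3) (x : 'I_n.+1 * (B * 'I_3)) :=
  (- x.1, tau x.2)%R.

Variable tau : B * 'I_3 -> B * 'I_3.
Hypothesis tauK : involutive tau.
Hypothesis tau_step : forall j y, j < 3 -> tau (trunc_step step j y) = trunc_step step j (tau y).
Hypothesis tau_volt : forall j y, j < 3 -> trunc_volt j (tau y) = (- trunc_volt j y)%R.

Definition trunc_cover_sym (z : D * 'I_3) : D * 'I_3 :=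
  cover_unassoc (cover_flip tau (cover_assoc z)).

Lemma trunc_cover_symK : involutive trunc_cover_sym.
Proof.
by move=> z; rewrite /trunc_cover_sym cover_unassocK /cover_flip /= opprK tauK cover_assocK.
Qed.

Lemma trunc_cover_sym_step j z : j < 3 ->
  trunc_cover_sym (trunc_step r j z) = trunc_step r j (trunc_cover_sym z).
Proof.
move=> j_lt; apply: (can_inj cover_assocK).
rewrite /trunc_cover_sym cover_unassocK !trunc_cover_step // cover_unassocK.
rewrite /cover_flip /cover_step /=.
by rewrite tau_step // tau_volt // zpN opprD.
Qed.

Definition trunc_cover_perm : {perm D * 'I_3} := perm (can_inj trunc_cover_symK).

Lemma trunc_cover_perm_aut :
  trunc_cover_perm \in map_aut (trunc_r0 (r 0) (r 1)) (trunc_r1 (r 2)) (trunc_r2 (r 2)).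
Proof.
rewrite inE; apply/forallP => z; rewrite !permE.
apply/and3P; split; apply/eqP.
- exact: (@trunc_cover_sym_step 0).
- exact: (@trunc_cover_sym_step 1).
- exact: (@trunc_cover_sym_step 2).
Qed.

End TruncatedCover.

Section SheetChain.
Variables (n m : nat) (u w : 'I_m).
Hypothesis m_gt3 : 3 < m.
Hypothesis uw : u != w.
Local Notation V := ('I_n.+1 * 'I_m)%type.
Variable e : rel V.
Hypothesis e_sym : symmetric e.
Hypothesis e_sheet : forall k p q, p != q ->
  ~~ ((p == u) && (q == w) || (p == w) && (q == u)) -> e (k, p) (k, q).
Hypothesis e_link : forall k, e (k, u) (k + zp 1, w)%R.
Variable good : pred V.
Hypothesis one_bad : forall x y, ~~ good x -> ~~ good y -> x = y.

Definition good_rel : rel V := fun x y => [&& good x, good y & e x y].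

Lemma good_rel_sym : symmetric good_rel.
Proof. by move=> x y; rewrite /good_rel e_sym andbA andbCA -andbA. Qed.

Lemma sheet_detour k : exists2 r, r \notin [set u; w] & good (k, r).
Proof.
have : 1 < #|~: [set u; w]|.
  by have := cardsC [set u; w]; rewrite card_ord cards2 uw; lia.
case/card_gt1P=> r1 [r2 []]; rewrite !inE => r1_out r2_out r12.
have [g1|b1] := boolP (good (k, r1)); first by exists r1; rewrite ?inE.
have [g2|b2] := boolP (good (k, r2)); first by exists r2; rewrite ?inE.
by case: (one_bad b1 b2) r12 => ->; rewrite eqxx.
Qed.

Lemma connect_sheet k p q : good (k, p) -> good (k, q) -> connect good_rel (k, p) (k, q).
Proof.
move=> gp gq; have [->|pq] := eqVneq p q; first exact: connect0.
have [uw_pq|] := boolP ((p == u) && (q == w) || (p == w) && (q == u)); last first.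
  by move=> not_uw; apply: connect1; rewrite /good_rel gp gq e_sheet.
have [r r_out gr] := sheet_detour k; move: r_out; rewrite !inE negb_or => /andP[ru rw].
have e_r x : (x == u) || (x == w) -> e (k, r) (k, x).
  by case/orP=> /eqP->; apply: e_sheet; rewrite // ?(negbTE ru) ?(negbTE rw) ?andbF.
apply: (@connect_trans _ _ (k, r)); apply: connect1; rewrite /good_rel ?gp ?gq gr /=.
  by rewrite e_sym e_r //; case/orP: uw_pq => /andP[-> _]; rewrite ?orbT.
by rewrite e_r //; case/orP: uw_pq => /andP[_ ->]; rewrite ?orbT.
Qed.

(* The only link (k, u) -- (k + 1, w) that can meet the deleted vertex. *)
Definition broken_link : 'I_n.+1 :=
  if [pick x | ~~ good x] is Some x then (if x.2 == w then x.1 - zp 1 else x.1)%R else 0%R.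

Lemma link_good k : k != broken_link -> good (k, u) && good (k + zp 1, w)%R.
Proof.
rewrite /broken_link; case: pickP => [x bx|all_good] k_ok; last by rewrite !(negbFE (all_good _)).
apply/andP; split; apply/negPn/negP => b.
  by move: k_ok; rewrite -(one_bad b bx) /= (negbTE uw) eqxx.
by move: k_ok; rewrite -(one_bad b bx) /= eqxx addrK eqxx.
Qed.

Lemma connect_chain i : i < n.+1 -> forall p q,
  good (broken_link + zp 1 + zp i, p)%R -> good (broken_link + zp 1, q)%R ->
  connect good_rel (broken_link + zp 1 + zp i, p)%R (broken_link + zp 1, q)%R.
Proof.
elim: i => [|i IHi] i_lt p q gp gq.
  by move: gp; rewrite zp0 addr0 => gp; exact: connect_sheet.
set k := (broken_link + zp 1 + zp i)%R.
have k_ok : k != broken_link.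
  rewrite /k -addrA -zpD -(PoszD 1 i) add1n.
  apply/negP => /eqP/(congr1 (fun t => t - broken_link)%R).
  by rewrite addrC addrK subrr; apply/eqP/zp_neq0; rewrite i_lt.
have /andP[gu gw] := link_good k_ok.
rewrite -[i.+1]addn1 PoszD zpD addrA -/k in gp *.
apply: connect_trans (connect_sheet gp gw) _.
apply: connect_trans (connect1 _) (IHi (ltnW i_lt) _ _ gu gq).
by rewrite good_rel_sym /good_rel gu gw e_link.
Qed.

Lemma connect_good x y : good x -> good y -> connect good_rel x y.
Proof.
have [r _ gr] := sheet_detour (broken_link + zp 1)%R.
have to_ref z : good z -> connect good_rel z (broken_link + zp 1, r)%R.
  case: z => k p; rewrite -[k](subrK (broken_link + zp 1)%R) addrC -[(k - _)%R]zp_val => gp.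
  exact: connect_chain (ltn_ord _) _ _ gp gr.
move=> gx gy; apply: connect_trans (to_ref _ gx) _.
by rewrite (sym_connect_sym good_rel_sym) to_ref.
Qed.

End SheetChain.

(** * The triangulation K7 of the torus *)

(* The flags of K7 are 0, ..., 83; flags 6t, ..., 6t + 5 are those of triangle t, on which r0
   acts as (0 1)(2 3)(4 5) and r1 as (0 2)(1 4)(3 5).  Vertex 0 is the hub and triangle 8, with
   vertices 1, 3, 4, is the branch face. *)
Definition k7_r2_t : seq nat :=
  [:: 6; 7; 14; 15; 48; 49; 0; 1; 26; 27; 54; 55;
     18; 19; 2; 3; 60; 61; 12; 13; 32; 33; 46; 47;
     30; 31; 8; 9; 70; 71; 24; 25; 20; 21; 76; 77;
     42; 43; 50; 51; 66; 67; 36; 37; 56; 57; 22; 23;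
     4; 5; 38; 39; 72; 73; 10; 11; 44; 45; 82; 83;
     16; 17; 68; 69; 78; 79; 40; 41; 62; 63; 28; 29;
     52; 53; 80; 81; 34; 35; 64; 65; 74; 75; 58; 59].
Definition k7_vertex_t : seq nat :=
  [:: 0; 1; 0; 3; 1; 3; 0; 1; 0; 5; 1; 5;
     0; 2; 0; 3; 2; 3; 0; 2; 0; 6; 2; 6;
     0; 4; 0; 5; 4; 5; 0; 4; 0; 6; 4; 6;
     1; 2; 1; 4; 2; 4; 1; 2; 1; 6; 2; 6;
     1; 3; 1; 4; 3; 4; 1; 5; 1; 6; 5; 6;
     2; 3; 2; 5; 3; 5; 2; 4; 2; 5; 4; 5;
     3; 4; 3; 6; 4; 6; 3; 5; 3; 6; 5; 6].
Definition k7_edge_t : seq nat :=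
  [:: 0; 0; 2; 2; 7; 7; 0; 0; 4; 4; 9; 9;
     1; 1; 2; 2; 11; 11; 1; 1; 5; 5; 14; 14;
     3; 3; 4; 4; 18; 18; 3; 3; 5; 5; 19; 19;
     6; 6; 8; 8; 12; 12; 6; 6; 10; 10; 14; 14;
     7; 7; 8; 8; 15; 15; 9; 9; 10; 10; 20; 20;
     11; 11; 13; 13; 16; 16; 12; 12; 13; 13; 18; 18;
     15; 15; 17; 17; 19; 19; 16; 16; 17; 17; 20; 20].
Definition k7_vertex_flag_t : seq nat := [:: 0; 1; 13; 3; 25; 9; 21].
Definition k7_edge_flag_t : seq nat :=
  [:: 0; 12; 2; 24; 8; 20; 36; 4; 38; 10; 44; 16;
     40; 62; 22; 52; 64; 74; 28; 34; 58].
(* Connectivity certificates: words in the generators leading each flag to the chosen flag of its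
   vertex, edge and face, and to the chosen flag of the hub. *)
Definition vertex_word_t : seq (seq nat) :=
  [:: [::]; [::]; [:: 1]; [::]; [:: 1]; [:: 1]; [:: 2]; [:: 2]; [:: 1; 2]; [::]; [:: 1; 2]; [:: 1];
     [:: 1; 2; 1]; [::]; [:: 2; 1]; [:: 2]; [:: 1]; [:: 1; 2]; [:: 2; 1; 2; 1]; [:: 2];
     [:: 1; 2; 1; 2; 1]; [::]; [:: 1; 2]; [:: 1]; [:: 1; 2; 1; 2]; [::]; [:: 2; 1; 2]; [:: 2];
     [:: 1]; [:: 1; 2]; [:: 2; 1; 2; 1; 2]; [:: 2]; [:: 2; 1; 2; 1; 2; 1]; [:: 2]; [:: 1; 2];
     [:: 1; 2]; [:: 1; 2; 1; 2; 1]; [:: 2; 1; 2; 1; 2]; [:: 2; 1; 2; 1]; [:: 1; 2; 1; 2; 1];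
     [:: 2; 1; 2; 1; 2; 1]; [:: 2; 1; 2; 1]; [:: 2; 1; 2; 1; 2; 1]; [:: 1; 2; 1; 2];
     [:: 2; 1; 2; 1; 2]; [:: 1; 2; 1]; [:: 2; 1; 2]; [:: 2; 1]; [:: 2; 1]; [:: 2; 1]; [:: 1; 2; 1];
     [:: 2; 1; 2; 1; 2; 1]; [:: 1; 2; 1]; [:: 2; 1; 2; 1; 2]; [:: 2; 1; 2]; [:: 2; 1];
     [:: 1; 2; 1; 2]; [:: 2; 1; 2; 1]; [:: 1; 2; 1]; [:: 1; 2; 1; 2; 1]; [:: 2; 1]; [:: 2; 1; 2];
     [:: 1; 2; 1]; [:: 2; 1; 2; 1; 2]; [:: 1; 2; 1; 2]; [:: 2; 1; 2; 1; 2; 1]; [:: 1; 2; 1; 2; 1];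
     [:: 1; 2; 1]; [:: 2; 1; 2; 1]; [:: 1; 2; 1; 2]; [:: 2; 1]; [:: 2; 1; 2]; [:: 2; 1; 2; 1];
     [:: 1; 2; 1; 2]; [:: 1; 2; 1; 2; 1]; [:: 1; 2; 1; 2]; [:: 2; 1; 2]; [:: 2; 1; 2];
     [:: 2; 1; 2; 1; 2]; [:: 1; 2; 1; 2; 1]; [:: 2; 1; 2; 1; 2; 1]; [:: 2; 1; 2; 1; 2];
     [:: 2; 1; 2; 1]; [:: 2; 1; 2; 1; 2; 1]].
Definition edge_word_t : seq (seq nat) :=
  [:: [::]; [:: 0]; [::]; [:: 0]; [::]; [:: 0]; [:: 2]; [:: 2; 0]; [::]; [:: 0]; [::]; [:: 0]; [::];
     [:: 0]; [:: 2]; [:: 2; 0]; [::]; [:: 0]; [:: 2]; [:: 2; 0]; [::]; [:: 0]; [::]; [:: 0]; [::];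
     [:: 0]; [:: 2]; [:: 2; 0]; [::]; [:: 0]; [:: 2]; [:: 2; 0]; [:: 2]; [:: 2; 0]; [::]; [:: 0];
     [::]; [:: 0]; [::]; [:: 0]; [::]; [:: 0]; [:: 2]; [:: 2; 0]; [::]; [:: 0]; [:: 2]; [:: 2; 0];
     [:: 2]; [:: 2; 0]; [:: 2]; [:: 2; 0]; [::]; [:: 0]; [:: 2]; [:: 2; 0]; [:: 2]; [:: 2; 0]; [::];
     [:: 0]; [:: 2]; [:: 2; 0]; [::]; [:: 0]; [::]; [:: 0]; [:: 2]; [:: 2; 0]; [:: 2]; [:: 2; 0];
     [:: 2]; [:: 2; 0]; [:: 2]; [:: 2; 0]; [::]; [:: 0]; [:: 2]; [:: 2; 0]; [:: 2]; [:: 2; 0];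
     [:: 2]; [:: 2; 0]; [:: 2]; [:: 2; 0]].
Definition face_word_t : seq (seq nat) :=
  [:: [::]; [:: 0]; [:: 1]; [:: 0; 1]; [:: 1; 0]; [:: 0; 1; 0]; [::]; [:: 0]; [:: 1]; [:: 0; 1];
     [:: 1; 0]; [:: 0; 1; 0]; [::]; [:: 0]; [:: 1]; [:: 0; 1]; [:: 1; 0]; [:: 0; 1; 0]; [::];
     [:: 0]; [:: 1]; [:: 0; 1]; [:: 1; 0]; [:: 0; 1; 0]; [::]; [:: 0]; [:: 1]; [:: 0; 1]; [:: 1; 0];
     [:: 0; 1; 0]; [::]; [:: 0]; [:: 1]; [:: 0; 1]; [:: 1; 0]; [:: 0; 1; 0]; [::]; [:: 0]; [:: 1];
     [:: 0; 1]; [:: 1; 0]; [:: 0; 1; 0]; [::]; [:: 0]; [:: 1]; [:: 0; 1]; [:: 1; 0]; [:: 0; 1; 0];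
     [::]; [:: 0]; [:: 1]; [:: 0; 1]; [:: 1; 0]; [:: 0; 1; 0]; [::]; [:: 0]; [:: 1]; [:: 0; 1];
     [:: 1; 0]; [:: 0; 1; 0]; [::]; [:: 0]; [:: 1]; [:: 0; 1]; [:: 1; 0]; [:: 0; 1; 0]; [::];
     [:: 0]; [:: 1]; [:: 0; 1]; [:: 1; 0]; [:: 0; 1; 0]; [::]; [:: 0]; [:: 1]; [:: 0; 1]; [:: 1; 0];
     [:: 0; 1; 0]; [::]; [:: 0]; [:: 1]; [:: 0; 1]; [:: 1; 0]; [:: 0; 1; 0]].
Definition root_word_t : seq (seq nat) :=
  [:: [::]; [:: 0]; [:: 1]; [:: 0; 1]; [:: 1; 0]; [:: 0; 1; 0]; [:: 2]; [:: 2; 0]; [:: 1; 2];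
     [:: 0; 1; 2]; [:: 1; 2; 0]; [:: 0; 1; 2; 0]; [:: 1; 2; 1]; [:: 0; 1; 2; 1]; [:: 2; 1];
     [:: 2; 0; 1]; [:: 0; 1; 2; 0; 1]; [:: 1; 2; 0; 1]; [:: 2; 1; 2; 1]; [:: 2; 0; 1; 2; 1];
     [:: 1; 2; 1; 2; 1]; [:: 0; 1; 2; 1; 2; 1]; [:: 1; 2; 0; 1; 2; 1]; [:: 0; 1; 2; 0; 1; 2; 1];
     [:: 1; 2; 1; 2]; [:: 0; 1; 2; 1; 2]; [:: 2; 1; 2]; [:: 2; 0; 1; 2]; [:: 0; 1; 2; 0; 1; 2];
     [:: 1; 2; 0; 1; 2]; [:: 2; 1; 2; 1; 2]; [:: 2; 0; 1; 2; 1; 2]; [:: 2; 1; 2; 1; 2; 1];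
     [:: 2; 0; 1; 2; 1; 2; 1]; [:: 1; 2; 0; 1; 2; 1; 2]; [:: 1; 2; 0; 1; 2; 1; 2; 1];
     [:: 1; 2; 1; 2; 1; 0]; [:: 0; 1; 2; 1; 2; 1; 0]; [:: 2; 1; 2; 1; 0]; [:: 2; 0; 1; 2; 1; 0];
     [:: 0; 1; 2; 0; 1; 2; 1; 0]; [:: 1; 2; 0; 1; 2; 1; 0]; [:: 2; 1; 2; 1; 2; 1; 0];
     [:: 2; 0; 1; 2; 1; 2; 1; 0]; [:: 2; 1; 2; 1; 2; 0]; [:: 2; 0; 1; 2; 1; 2; 0];
     [:: 2; 1; 2; 0; 1; 2; 1]; [:: 1; 2; 0; 1; 2; 1; 2; 0]; [:: 2; 1; 0]; [:: 2; 0; 1; 0];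
     [:: 1; 2; 1; 0]; [:: 0; 1; 2; 1; 0]; [:: 1; 2; 0; 1; 0]; [:: 0; 1; 2; 0; 1; 0];
     [:: 2; 1; 2; 0]; [:: 2; 0; 1; 2; 0]; [:: 1; 2; 1; 2; 0]; [:: 0; 1; 2; 1; 2; 0];
     [:: 1; 2; 0; 1; 2; 0]; [:: 0; 1; 2; 0; 1; 2; 0]; [:: 2; 0; 1; 2; 0; 1]; [:: 2; 1; 2; 0; 1];
     [:: 1; 2; 0; 1; 2; 0; 1]; [:: 0; 1; 2; 0; 1; 2; 0; 1]; [:: 1; 2; 1; 2; 0; 1];
     [:: 0; 1; 2; 1; 2; 0; 1]; [:: 2; 0; 1; 2; 0; 1; 2; 1; 0]; [:: 2; 1; 2; 0; 1; 2; 1; 0];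
     [:: 2; 1; 2; 0; 1; 2; 0; 1]; [:: 1; 2; 1; 2; 0; 1; 2]; [:: 2; 0; 1; 2; 0; 1; 2];
     [:: 2; 1; 2; 0; 1; 2]; [:: 2; 1; 2; 0; 1; 0]; [:: 2; 0; 1; 2; 0; 1; 0];
     [:: 1; 2; 1; 2; 0; 1; 0]; [:: 0; 1; 2; 1; 2; 0; 1; 0]; [:: 1; 2; 0; 1; 2; 0; 1; 0];
     [:: 0; 1; 2; 0; 1; 2; 0; 1; 0]; [:: 2; 1; 2; 1; 2; 0; 1]; [:: 1; 2; 1; 2; 0; 1; 2; 0];
     [:: 2; 1; 2; 1; 2; 0; 1; 0]; [:: 2; 0; 1; 2; 1; 2; 0; 1; 0]; [:: 2; 1; 2; 0; 1; 2; 0];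
     [:: 2; 0; 1; 2; 0; 1; 2; 0]].
(* A symmetry of T(K7); the flag (a, i) of T(K7) has index 3a + i. *)
Definition tau_flag_t : seq nat :=
  [:: 5; 5; 49; 3; 3; 15; 4; 4; 48; 1; 1; 7; 2; 2; 14; 0; 0; 6;
     5; 49; 49; 3; 15; 15; 72; 52; 52; 74; 80; 80; 61; 17; 17; 64; 78; 78;
     38; 50; 50; 36; 42; 42; 4; 48; 48; 1; 7; 7; 56; 44; 44; 54; 10; 10;
     38; 38; 50; 36; 36; 42; 39; 39; 51; 41; 41; 67; 37; 37; 43; 40; 40; 66;
     73; 73; 53; 76; 76; 34; 72; 72; 52; 74; 74; 80; 77; 77; 35; 75; 75; 81;
     73; 53; 53; 76; 34; 34; 39; 51; 51; 41; 67; 67; 25; 31; 31; 28; 70; 70;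
     19; 19; 13; 22; 22; 46; 18; 18; 12; 20; 20; 32; 23; 23; 47; 21; 21; 33;
     19; 13; 13; 22; 46; 46; 60; 16; 16; 62; 68; 68; 37; 43; 43; 40; 66; 66;
     2; 14; 14; 0; 6; 6; 18; 12; 12; 20; 32; 32; 26; 8; 8; 24; 30; 30;
     61; 61; 17; 64; 64; 78; 60; 60; 16; 62; 62; 68; 65; 65; 79; 63; 63; 69;
     56; 56; 44; 54; 54; 10; 57; 57; 45; 59; 59; 83; 55; 55; 11; 58; 58; 82;
     23; 47; 47; 21; 33; 33; 57; 45; 45; 59; 83; 83; 77; 35; 35; 75; 81; 81;
     26; 26; 8; 24; 24; 30; 27; 27; 9; 29; 29; 71; 25; 25; 31; 28; 28; 70;
     55; 11; 11; 58; 82; 82; 27; 9; 9; 29; 71; 71; 65; 79; 79; 63; 69; 69].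
Definition tau_type_t : seq nat :=
  [:: 1; 0; 0; 1; 0; 0; 1; 0; 0; 1; 0; 0; 1; 0; 0; 1; 0; 0;
     2; 2; 1; 2; 2; 1; 2; 2; 1; 2; 2; 1; 2; 2; 1; 2; 2; 1;
     2; 2; 1; 2; 2; 1; 2; 2; 1; 2; 2; 1; 2; 2; 1; 2; 2; 1;
     1; 0; 0; 1; 0; 0; 1; 0; 0; 1; 0; 0; 1; 0; 0; 1; 0; 0;
     1; 0; 0; 1; 0; 0; 1; 0; 0; 1; 0; 0; 1; 0; 0; 1; 0; 0;
     2; 2; 1; 2; 2; 1; 2; 2; 1; 2; 2; 1; 2; 2; 1; 2; 2; 1;
     1; 0; 0; 1; 0; 0; 1; 0; 0; 1; 0; 0; 1; 0; 0; 1; 0; 0;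
     2; 2; 1; 2; 2; 1; 2; 2; 1; 2; 2; 1; 2; 2; 1; 2; 2; 1;
     2; 2; 1; 2; 2; 1; 2; 2; 1; 2; 2; 1; 2; 2; 1; 2; 2; 1;
     1; 0; 0; 1; 0; 0; 1; 0; 0; 1; 0; 0; 1; 0; 0; 1; 0; 0;
     1; 0; 0; 1; 0; 0; 1; 0; 0; 1; 0; 0; 1; 0; 0; 1; 0; 0;
     2; 2; 1; 2; 2; 1; 2; 2; 1; 2; 2; 1; 2; 2; 1; 2; 2; 1;
     1; 0; 0; 1; 0; 0; 1; 0; 0; 1; 0; 0; 1; 0; 0; 1; 0; 0;
     2; 2; 1; 2; 2; 1; 2; 2; 1; 2; 2; 1; 2; 2; 1; 2; 2; 1].

Definition tab_step (i a : nat) : nat :=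
  match i with
  | 0 => if odd a then a.-1 else a.+1
  | 1 => 6 * (a %/ 6) + nth 0 [:: 2; 4; 0; 5; 1; 3] (a %% 6)
  | _ => nth 0 k7_r2_t a
  end.

(* The sheet changes when crossing the edge 13 (flags 4, 5 and 48, 49) and when turning at the
   hub between flags 0 and 2. *)
Definition tab_volt (i a : nat) : int :=
  match i, a with
  | 0, 4 | 0, 48 | 1, 0 => 1
  | 0, 5 | 0, 49 | 1, 2 => -1
  | _, _ => 0
  end.

Definition tab_vertex (a : nat) : nat := nth 0 k7_vertex_t a.
Definition tab_edge (a : nat) : nat := nth 0 k7_edge_t a.
Definition tab_face (a : nat) : nat := a %/ 6.
Definition branch_face : nat := 8.

(* Potentials integrating the voltages along each edge and around each unbranched face. *)
Definition edge_pot (a : nat) : int := if a \in [:: 5; 49] then 1 else 0.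
Definition face_pot (a : nat) : int := if a \in [:: 2; 3; 5] then 1 else 0.

Definition tab_colour (a : nat) : bool :=
  (a %% 6 \in [:: 0; 3; 4]) (+) (a %/ 6 \in [:: 1; 2; 5; 7; 8; 11; 13]).

Definition vertex_flag (v : nat) : nat := nth 0 k7_vertex_flag_t v.
Definition edge_flag (e : nat) : nat := nth 0 k7_edge_flag_t e.
Definition vertex_word (a : nat) : seq nat := nth [::] vertex_word_t a.
Definition edge_word (a : nat) : seq nat := nth [::] edge_word_t a.
Definition face_word (a : nat) : seq nat := nth [::] face_word_t a.
Definition root_word (a : nat) : seq nat := nth [::] root_word_t a.

Definition tab_walk (w : seq nat) (a : nat) : nat := foldl (fun a i => tab_step i a) a w.
Fixpoint tab_walk_volt (w : seq nat) (a : nat) : int :=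
  if w is i :: w' then (tab_volt i a + tab_walk_volt w' (tab_step i a))%R else 0%R.

Definition hub_loop : seq nat := [:: 1; 2; 1; 2; 1; 2; 1; 2; 1; 2; 1; 2].
Definition face_loop : seq nat := [:: 0; 1; 0; 1; 0; 1].

Definition tab_trunc_step (j : nat) (y : nat * nat) : nat * nat :=
  let: (a, i) := y in
  match j, i with
  | 0, 0 => (tab_step 0 a, 0) | 0, _ => (tab_step 1 a, i)
  | 1, 0 => (a, 1) | 1, 1 => (a, 0) | 1, _ => (tab_step 2 a, i)
  | _, 0 => (tab_step 2 a, 0) | _, 1 => (a, 2) | _, _ => (a, 1)
  end.

Definition tab_trunc_volt (j : nat) (y : nat * nat) : int :=
  let: (a, i) := y in
  match j, i with
  | 0, 0 => tab_volt 0 a | 0, _ => tab_volt 1 a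
  | 1, 2 => tab_volt 2 a | 2, 0 => tab_volt 2 a
  | _, _ => 0
  end.

Definition tab_tau (y : nat * nat) : nat * nat :=
  (nth 0 tau_flag_t (3 * y.1 + y.2), nth 0 tau_type_t (3 * y.1 + y.2)).

Definition flags : seq nat := iota 0 84.
Definition all_flags (P : pred nat) : bool := all P flags.

Definition face_flags (f : nat) : seq nat := iota (6 * f) 6.
Definition incident (v f : nat) : bool := has (fun a => tab_vertex a == v) (face_flags f).

(* The checks are stated on nat: under [vm_compute], comparing ordinals evaluates their whole
   finType structure. *)
Definition tab_involutive : bool := all_flags (fun a => all (fun i =>
  [&& tab_step i a < 84, tab_step i (tab_step i a) == a, tab_step i a != a &
      tab_volt i (tab_step i a) == (- tab_volt i a)%R]) [:: 0; 1; 2]).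
Lemma tab_involutiveP : tab_involutive. Proof. by vm_compute. Qed.

Definition tab_r02 : bool := all_flags (fun a =>
  [&& tab_step 0 (tab_step 2 a) == tab_step 2 (tab_step 0 a), tab_step 0 (tab_step 2 a) != a &
      tab_volt 2 a + tab_volt 0 (tab_step 2 a) == tab_volt 0 a + tab_volt 2 (tab_step 0 a)]%R).
Lemma tab_r02P : tab_r02. Proof. by vm_compute. Qed.

Definition tab_bipartite : bool := all_flags (fun a =>
  all (fun i => tab_colour (tab_step i a) == ~~ tab_colour a) [:: 0; 1; 2]).
Lemma tab_bipartiteP : tab_bipartite. Proof. by vm_compute. Qed.

Definition tab_classes : bool := all_flags (fun a => [&& tab_vertex a < 7, tab_edge a < 21,
  all (fun i => (tab_vertex (tab_step i a) == tab_vertex a) &&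
                ((tab_vertex a != 0) ==> (tab_volt i a == 0))) [:: 1; 2],
  all (fun i => (tab_edge (tab_step i a) == tab_edge a) &&
                (edge_pot (tab_step i a) == edge_pot a + tab_volt i a)%R) [:: 0; 2] &
  all (fun i => (tab_face (tab_step i a) == tab_face a) &&
                ((tab_face a != branch_face) ==>
                 (face_pot (tab_step i a) == face_pot a + tab_volt i a)%R)) [:: 0; 1]]).
Lemma tab_classesP : tab_classes. Proof. by vm_compute. Qed.

Definition tab_words : bool := all_flags (fun a => [&&
  all (mem [:: 1; 2]) (vertex_word a) && (tab_walk (vertex_word a) a == vertex_flag (tab_vertex a)),
  all (mem [:: 0; 2]) (edge_word a) && (tab_walk (edge_word a) a == edge_flag (tab_edge a)),
  all (mem [:: 0; 1]) (face_word a) && (tab_walk (face_word a) a == 6 * tab_face a) &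
  all (mem [:: 0; 1; 2]) (root_word a) && (tab_walk (root_word a) a == vertex_flag 0)]).
Lemma tab_wordsP : tab_words. Proof. by vm_compute. Qed.

Definition tab_class_flags : bool := [&&
  all (fun v => (vertex_flag v < 84) && (tab_vertex (vertex_flag v) == v)) (iota 0 7),
  all (fun e => [&& edge_flag e < 84, tab_edge (edge_flag e) == e & edge_pot (edge_flag e) == 0])
    (iota 0 21) &
  all (fun f => face_pot (6 * f) == 0) (iota 0 14)].
Lemma tab_class_flagsP : tab_class_flags. Proof. by vm_compute. Qed.

Lemma hub_loop_closed : tab_walk hub_loop (vertex_flag 0) = vertex_flag 0.
Proof. by vm_compute. Qed.
Lemma hub_loop_volt : tab_walk_volt hub_loop (vertex_flag 0) = 1%R.
Proof. by vm_compute. Qed.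
Lemma face_loop_closed : tab_walk face_loop (6 * branch_face) = 6 * branch_face.
Proof. by vm_compute. Qed.
Lemma face_loop_volt : tab_walk_volt face_loop (6 * branch_face) = 1%R.
Proof. by vm_compute. Qed.

Definition tab_simple : bool := all_flags (fun a =>
  (tab_vertex (tab_step 0 a) != tab_vertex a) && all_flags (fun b =>
  (tab_vertex a == tab_vertex b) && (tab_vertex (tab_step 0 a) == tab_vertex (tab_step 0 b)) ==>
  (tab_edge a == tab_edge b) && ((tab_vertex a != 0) ==> (edge_pot a == edge_pot b)))).
Lemma tab_simpleP : tab_simple. Proof. by vm_compute. Qed.

Definition tab_corner_pot : bool := all_flags (fun a => all_flags (fun b =>
  [&& tab_face a == tab_face b, tab_face a != branch_face, tab_vertex a == tab_vertex b &
      tab_vertex a != 0] ==> (face_pot a == face_pot b))).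
Lemma tab_corner_potP : tab_corner_pot. Proof. by vm_compute. Qed.

Definition tab_shared_edge : bool := all_flags (fun a => all_flags (fun b =>
  [&& tab_vertex a != tab_vertex b, tab_face a != tab_face b,
      incident (tab_vertex a) (tab_face b) & incident (tab_vertex b) (tab_face a)] ==>
  has (fun z => [&& tab_vertex z == tab_vertex a, tab_vertex (tab_step 0 z) == tab_vertex b &
                    tab_face (tab_step 2 z) == tab_face b]) (face_flags (tab_face a)))).
Lemma tab_shared_edgeP : tab_shared_edge. Proof. by vm_compute. Qed.

Definition tab_rim_adjacency : bool := [&&
  all (fun p => has (fun a => (tab_vertex a == p.+1) && (tab_vertex (tab_step 0 a) == 0)) flags)
    (iota 0 6),
  all (fun p => all (fun q => (p != q) && ~~ ((p == 0) && (q == 2) || (p == 2) && (q == 0)) ==>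
    has (fun a => [&& tab_vertex a == p.+1, tab_vertex (tab_step 0 a) == q.+1 &
                      tab_volt 0 a == 0]) flags) (iota 0 6)) (iota 0 6) &
  has (fun a => [&& tab_vertex a == 1, tab_vertex (tab_step 0 a) == 3 & tab_volt 0 a == 1])
    flags].
Lemma tab_rim_adjacencyP : tab_rim_adjacency. Proof. by vm_compute. Qed.

Definition tab_tau_sym : bool := all_flags (fun a => all (fun i =>
  [&& (tab_tau (a, i)).1 < 84, (tab_tau (a, i)).2 < 3, tab_tau (tab_tau (a, i)) == (a, i) &
      all (fun j => (tab_tau (tab_trunc_step j (a, i)) == tab_trunc_step j (tab_tau (a, i))) &&
                    (tab_trunc_volt j (tab_tau (a, i)) == - tab_trunc_volt j (a, i))%R) (iota 0 3)])
  (iota 0 3)) && ((tab_tau (0, 0)).2 != 0).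
Lemma tab_tau_symP : tab_tau_sym. Proof. by vm_compute. Qed.


Lemma all_iotaP m (P : pred nat) : all P (iota 0 m) -> forall v : 'I_m, P v.
Proof. by move=> /allP P_iota v; apply: P_iota; rewrite mem_iota ltn_ord. Qed.

Lemma has_iotaP m (P : pred nat) : has P (iota 0 m) -> exists v : 'I_m, P v.
Proof. by case/hasP=> v; rewrite mem_iota => /andP[_ v_lt] Pv; exists (Ordinal v_lt). Qed.

Definition k7_step (i : nat) (a : 'I_84) : 'I_84 := inord (tab_step i a).
Definition k7_volt (i : nat) (a : 'I_84) : int := tab_volt i a.
Definition k7_vertex (a : 'I_84) : 'I_7 := inord (tab_vertex a).
Definition k7_edge (a : 'I_84) : 'I_21 := inord (tab_edge a).
Definition k7_face (a : 'I_84) : 'I_14 := inord (tab_face a).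
Definition k7_vertex_flag (v : 'I_7) : 'I_84 := inord (vertex_flag v).
Definition k7_edge_flag (e : 'I_21) : 'I_84 := inord (edge_flag e).
Definition k7_face_flag (f : 'I_14) : 'I_84 := inord (6 * f).
Definition hub : 'I_7 := ord0.
Definition k7_branch_face : 'I_14 := inord branch_face.

Lemma tab_involutive_at (a : 'I_84) i : i < 3 ->
  [/\ tab_step i a < 84, tab_step i (tab_step i a) = a, tab_step i a != a &
      tab_volt i (tab_step i a) = (- tab_volt i a)%R].
Proof.
move=> i_lt; have /allP/(_ i) := all_iotaP tab_involutiveP a.
by rewrite !inE; case: i i_lt => [|[|[|]]] // _ /(_ isT) /and4P[-> /eqP-> -> /eqP->].
Qed.

Lemma tab_step_lt i (a : 'I_84) : tab_step i a < 84.
Proof.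
case: i => [|[|i]]; first by case: (tab_involutive_at a (isT : 0 < 3)).
  by case: (tab_involutive_at a (isT : 1 < 3)).
by case: (tab_involutive_at a (isT : 2 < 3)).
Qed.

Lemma val_k7_step i a : k7_step i a = tab_step i a :> nat.
Proof. by rewrite inordK // tab_step_lt. Qed.

Lemma k7_stepK i : i < 3 -> involutive (k7_step i).
Proof.
move=> i_lt a; apply: val_inj; rewrite /= !val_k7_step.
by case: (tab_involutive_at a i_lt).
Qed.

Lemma k7_step_fpf i a : i < 3 -> k7_step i a != a.
Proof. by move=> i_lt; rewrite -val_eqE /= val_k7_step; case: (tab_involutive_at a i_lt). Qed.

Lemma k7_voltN i a : i < 3 -> k7_volt i (k7_step i a) = (- k7_volt i a)%R.
Proof. by move=> i_lt; rewrite /k7_volt val_k7_step; case: (tab_involutive_at a i_lt). Qed.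

Lemma k7_step02 a :
  [/\ k7_step 0 (k7_step 2 a) = k7_step 2 (k7_step 0 a), k7_step 0 (k7_step 2 a) != a &
      k7_volt 2 a + k7_volt 0 (k7_step 2 a) = k7_volt 0 a + k7_volt 2 (k7_step 0 a)]%R.
Proof.
case/and3P: (all_iotaP tab_r02P a) => /eqP r02 r02_fpf /eqP v02; split.
- by apply: val_inj; rewrite /= !val_k7_step.
- by rewrite -val_eqE /= !val_k7_step.
- by rewrite /k7_volt !val_k7_step.
Qed.

Lemma k7_colour_step i (a : 'I_84) : i < 3 -> tab_colour (k7_step i a) = ~~ tab_colour a.
Proof.
move=> i_lt; rewrite val_k7_step; have /allP/(_ i) := all_iotaP tab_bipartiteP a.
by rewrite !inE; case: i i_lt => [|[|[|]]] // _ /(_ isT) /eqP.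
Qed.

Lemma tab_classes_at (a : 'I_84) : [/\ tab_vertex a < 7, tab_edge a < 21,
  forall i, i \in [:: 1; 2] ->
    tab_vertex (tab_step i a) = tab_vertex a /\ (tab_vertex a != 0 -> tab_volt i a = 0%R),
  forall i, i \in [:: 0; 2] ->
    tab_edge (tab_step i a) = tab_edge a /\
    edge_pot (tab_step i a) = (edge_pot a + tab_volt i a)%R &
  forall i, i \in [:: 0; 1] -> tab_face (tab_step i a) = tab_face a /\
    (tab_face a != branch_face -> face_pot (tab_step i a) = (face_pot a + tab_volt i a)%R)].
Proof.
case/and5P: (all_iotaP tab_classesP a) => -> -> /allP vP /allP eP /allP fP; split=> // i i_in.
- by case/andP: (vP i i_in) => /eqP-> /implyP v0; split=> // /v0/eqP.
- by case/andP: (eP i i_in) => /eqP-> /eqP->.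
- by case/andP: (fP i i_in) => /eqP-> /implyP f0; split=> // /f0/eqP.
Qed.

Lemma tab_face_lt (a : 'I_84) : tab_face a < 14.
Proof. by rewrite /tab_face ltn_divLR. Qed.

Lemma val_k7_vertex a : k7_vertex a = tab_vertex a :> nat.
Proof. by rewrite inordK //; case: (tab_classes_at a). Qed.
Lemma val_k7_edge a : k7_edge a = tab_edge a :> nat.
Proof. by rewrite inordK //; case: (tab_classes_at a). Qed.
Lemma val_k7_face a : k7_face a = tab_face a :> nat.
Proof. by rewrite inordK // tab_face_lt. Qed.

Lemma k7_vertex_step i a : i \in [:: 1; 2] -> k7_vertex (k7_step i a) = k7_vertex a.
Proof.
by move=> i_in; rewrite /k7_vertex val_k7_step; case: (tab_classes_at a) => _ _ /(_ i i_in) [->].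
Qed.

Lemma k7_volt_rim i a : i \in [:: 1; 2] -> k7_vertex a != hub -> k7_volt i a = 0%R.
Proof.
move=> i_in; rewrite -val_eqE /= val_k7_vertex.
by case: (tab_classes_at a) => _ _ /(_ i i_in) [_].
Qed.

Lemma k7_edge_step i a : i \in [:: 0; 2] -> k7_edge (k7_step i a) = k7_edge a.
Proof.
by move=> i_in; rewrite /k7_edge val_k7_step; case: (tab_classes_at a) => _ _ _ /(_ i i_in) [->].
Qed.

Lemma edge_pot_step i a : i \in [:: 0; 2] -> edge_pot (k7_step i a) = (edge_pot a + k7_volt i a)%R.
Proof. by move=> i_in; rewrite val_k7_step; case: (tab_classes_at a) => _ _ _ /(_ i i_in) []. Qed.

Lemma k7_face_step i a : i \in [:: 0; 1] -> k7_face (k7_step i a) = k7_face a.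
Proof.
move=> i_in; rewrite /k7_face val_k7_step.
by case: (tab_classes_at a) => _ _ _ _ /(_ i i_in) [->].
Qed.

Lemma k7_branch_faceE a : (k7_face a == k7_branch_face) = (tab_face a == branch_face).
Proof. by rewrite -val_eqE /= val_k7_face inordK. Qed.

Lemma face_pot_step i a : i \in [:: 0; 1] -> k7_face a != k7_branch_face ->
  face_pot (k7_step i a) = (face_pot a + k7_volt i a)%R.
Proof.
move=> i_in; rewrite k7_branch_faceE val_k7_step.
by case: (tab_classes_at a) => _ _ _ _ /(_ i i_in) [].
Qed.

Lemma val_base_walk w a : base_walk k7_step w a = tab_walk w a :> nat.
Proof. by elim: w a => [|i w IHw] a //=; rewrite IHw val_k7_step. Qed.

Lemma k7_walk_volt w a : walk_volt k7_step k7_volt w a = tab_walk_volt w a.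
Proof. by elim: w a => [|i w IHw] a //=; rewrite IHw val_k7_step. Qed.

Lemma tab_class_flags_at :
  [/\ forall v : 'I_7, vertex_flag v < 84 /\ tab_vertex (vertex_flag v) = v,
      forall e : 'I_21,
        [/\ edge_flag e < 84, tab_edge (edge_flag e) = e & edge_pot (edge_flag e) = 0%R]
    & forall f : 'I_14, face_pot (6 * f) = 0%R].
Proof.
case/and3P: tab_class_flagsP => /all_iotaP vP /all_iotaP eP /all_iotaP fP; split.
- by move=> v; case/andP: (vP v) => -> /eqP.
- by move=> e; case/and3P: (eP e) => -> /eqP-> /eqP.
- by move=> f; apply/eqP/fP.
Qed.

Lemma k7_vertex_flagK : cancel k7_vertex_flag k7_vertex.
Proof.
move=> v; apply: val_inj; case: tab_class_flags_at => /(_ v) [v_lt vK] _ _.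
by rewrite /= val_k7_vertex inordK.
Qed.

Lemma k7_edge_flagK : cancel k7_edge_flag k7_edge.
Proof.
move=> e; apply: val_inj; case: tab_class_flags_at => _ /(_ e) [e_lt eK _] _.
by rewrite /= val_k7_edge inordK.
Qed.

Lemma edge_pot_flag e : edge_pot (k7_edge_flag e) = 0%R.
Proof. by case: tab_class_flags_at => _ /(_ e) [e_lt _ e0] _; rewrite inordK. Qed.

Lemma val_k7_face_flag (f : 'I_14) : k7_face_flag f = 6 * f :> nat.
Proof. by rewrite inordK //; have := ltn_ord f; lia. Qed.

Lemma k7_face_flagK : cancel k7_face_flag k7_face.
Proof. by move=> f; apply: val_inj; rewrite /= val_k7_face val_k7_face_flag /tab_face mulKn. Qed.

Lemma face_pot_flag f : face_pot (k7_face_flag f) = 0%R.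
Proof. by rewrite val_k7_face_flag; case: tab_class_flags_at. Qed.

Lemma tab_words_at (a : 'I_84) :
  [/\ {subset vertex_word a <= [:: 1; 2]} /\
        tab_walk (vertex_word a) a = vertex_flag (tab_vertex a),
      {subset edge_word a <= [:: 0; 2]} /\ tab_walk (edge_word a) a = edge_flag (tab_edge a),
      {subset face_word a <= [:: 0; 1]} /\ tab_walk (face_word a) a = 6 * tab_face a &
      {subset root_word a <= [:: 0; 1; 2]} /\ tab_walk (root_word a) a = vertex_flag 0].
Proof.
by case/and4P: (all_iotaP tab_wordsP a) => /andP[/allP ? /eqP ?] /andP[/allP ? /eqP ?]
  /andP[/allP ? /eqP ?] /andP[/allP ? /eqP ?].
Qed.

Lemma k7_vertex_word (a : 'I_84) :
  base_walk k7_step (vertex_word a) a = k7_vertex_flag (k7_vertex a).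
Proof.
apply: val_inj; rewrite /= val_base_walk /k7_vertex_flag inordK.
  by rewrite val_k7_vertex; case: (tab_words_at a) => -[].
by case: tab_class_flags_at => /(_ (k7_vertex a)) [].
Qed.

Lemma k7_edge_word (a : 'I_84) : base_walk k7_step (edge_word a) a = k7_edge_flag (k7_edge a).
Proof.
apply: val_inj; rewrite /= val_base_walk /k7_edge_flag inordK.
  by rewrite val_k7_edge; case: (tab_words_at a) => _ [].
by case: tab_class_flags_at => _ /(_ (k7_edge a)) [].
Qed.

Lemma k7_face_word (a : 'I_84) : base_walk k7_step (face_word a) a = k7_face_flag (k7_face a).
Proof.
apply: val_inj; rewrite /= val_base_walk val_k7_face_flag val_k7_face.
by case: (tab_words_at a) => _ _ [].
Qed.

Lemma vertex_word_sub (a : 'I_84) : {subset vertex_word a <= [:: 1; 2]}.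
Proof. by case: (tab_words_at a) => -[]. Qed.
Lemma edge_word_sub (a : 'I_84) : {subset edge_word a <= [:: 0; 2]}.
Proof. by case: (tab_words_at a) => _ []. Qed.
Lemma face_word_sub (a : 'I_84) : {subset face_word a <= [:: 0; 1]}.
Proof. by case: (tab_words_at a) => _ _ []. Qed.
Lemma root_word_sub (a : 'I_84) : {subset root_word a <= [:: 0; 1; 2]}.
Proof. by case: (tab_words_at a) => _ _ _ []. Qed.

Lemma val_k7_hub_flag : k7_vertex_flag hub = vertex_flag 0 :> nat.
Proof. by rewrite inordK. Qed.

Lemma k7_root_word (a : 'I_84) : base_walk k7_step (root_word a) a = k7_vertex_flag hub.
Proof.
by apply: ord_inj; rewrite val_base_walk val_k7_hub_flag; case: (tab_words_at a) => _ _ _ [].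
Qed.

Lemma k7_hub_loop : base_walk k7_step hub_loop (k7_vertex_flag hub) = k7_vertex_flag hub /\
  walk_volt k7_step k7_volt hub_loop (k7_vertex_flag hub) = 1%R.
Proof.
split; last by rewrite k7_walk_volt val_k7_hub_flag hub_loop_volt.
by apply: ord_inj; rewrite val_base_walk val_k7_hub_flag hub_loop_closed.
Qed.

Lemma val_k7_branch_flag : k7_face_flag k7_branch_face = 6 * branch_face :> nat.
Proof. by rewrite val_k7_face_flag inordK. Qed.

Lemma k7_face_loop :
  base_walk k7_step face_loop (k7_face_flag k7_branch_face) = k7_face_flag k7_branch_face /\
  walk_volt k7_step k7_volt face_loop (k7_face_flag k7_branch_face) = 1%R.
Proof.
split; last by rewrite k7_walk_volt val_k7_branch_flag face_loop_volt.
by apply: ord_inj; rewrite val_base_walk val_k7_branch_flag face_loop_closed.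
Qed.

Lemma k7_hubE a : (k7_vertex a == hub) = (tab_vertex a == 0).
Proof. by rewrite -val_eqE /= val_k7_vertex. Qed.

Lemma k7_r0_vertex (a : 'I_84) : k7_vertex (k7_step 0 a) != k7_vertex a.
Proof. by rewrite -val_eqE /= !val_k7_vertex val_k7_step; case/andP: (all_iotaP tab_simpleP a). Qed.

Lemma k7_edge_ends (a b : 'I_84) : k7_vertex a = k7_vertex b ->
  k7_vertex (k7_step 0 a) = k7_vertex (k7_step 0 b) ->
  k7_edge a = k7_edge b /\ (k7_vertex a != hub -> edge_pot a = edge_pot b).
Proof.
move=> /(congr1 val) + /(congr1 val); rewrite /= !val_k7_vertex !val_k7_step => vab vab0.
case/andP: (all_iotaP tab_simpleP a) => _ /all_iotaP/(_ b).
rewrite vab vab0 !eqxx /= => /andP[/eqP eab /implyP pot]; split.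
  by apply: val_inj; rewrite /= !val_k7_edge.
by rewrite k7_hubE vab => /pot/eqP.
Qed.

Lemma face_pot_corner (a b : 'I_84) : k7_face a = k7_face b -> k7_face a != k7_branch_face ->
  k7_vertex a = k7_vertex b -> k7_vertex a != hub -> face_pot a = face_pot b.
Proof.
move=> /(congr1 val) + + /(congr1 val); rewrite /= !val_k7_face !val_k7_vertex.
rewrite k7_branch_faceE k7_hubE => fab fa vab va; apply/eqP.
have /implyP := all_iotaP (all_iotaP tab_corner_potP a) b; apply.
by rewrite (negbTE fa) (negbTE va) fab vab !eqxx.
Qed.

Lemma mem_face_flags (a : 'I_84) : nat_of_ord a \in face_flags (tab_face a).
Proof.
by rewrite mem_iota /tab_face; have := divn_eq a 6; have := ltn_pmod a (isT : 0 < 6); lia.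
Qed.

Lemma face_flags_face z f : z \in face_flags f -> tab_face z = f.
Proof.
rewrite mem_iota /tab_face => /andP[? ?].
by have := divn_eq z 6; have := ltn_pmod z (isT : 0 < 6); lia.
Qed.

Lemma k7_shared_edge (a b c d : 'I_84) :
  k7_vertex a != k7_vertex b -> k7_face a != k7_face b ->
  k7_vertex c = k7_vertex a -> k7_face c = k7_face b ->
  k7_vertex d = k7_vertex b -> k7_face d = k7_face a ->
  exists z, [/\ k7_vertex z = k7_vertex a, k7_vertex (k7_step 0 z) = k7_vertex b,
                k7_face z = k7_face a & k7_face (k7_step 2 z) = k7_face b].
Proof.
rewrite -!val_eqE /= !val_k7_vertex !val_k7_face => vab fab.
move=> /(congr1 val) + /(congr1 val) + /(congr1 val) + /(congr1 val).
rewrite /= !val_k7_vertex !val_k7_face => vc fc vd fd.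
have inc_ab : incident (tab_vertex a) (tab_face b).
  by apply/hasP; exists (nat_of_ord c); rewrite -?fc ?mem_face_flags ?vc.
have inc_ba : incident (tab_vertex b) (tab_face a).
  by apply/hasP; exists (nat_of_ord d); rewrite -?fd ?mem_face_flags ?vd.
have /implyP := all_iotaP (all_iotaP tab_shared_edgeP a) b.
rewrite vab fab inc_ab inc_ba => /(_ isT) /hasP[z z_in /and3P[/eqP vz /eqP vz0 /eqP fz2]].
have z_lt : z < 84 by move: z_in; rewrite mem_iota; have := tab_face_lt a; lia.
exists (Ordinal z_lt); split; apply: val_inj;
  by rewrite /= ?val_k7_vertex ?val_k7_face ?val_k7_step ?(face_flags_face z_in).
Qed.

(* Rim vertex p is vertex p + 1 of K7; [link_src] and [link_dst] are the ends of the edge 13. *)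
Definition rim (p : 'I_6) : 'I_7 := lift hub p.
Definition link_src : 'I_6 := ord0.
Definition link_dst : 'I_6 := inord 2.

Lemma link_src_neq_dst : link_src != link_dst.
Proof. by rewrite -val_eqE /= inordK. Qed.

Lemma k7_vertex_rim (a : 'I_84) (p : 'I_6) : (k7_vertex a == rim p) = (tab_vertex a == p.+1).
Proof. by rewrite -val_eqE /= val_k7_vertex. Qed.

Lemma k7_hub_adjacent p : exists a, k7_vertex a = rim p /\ k7_vertex (k7_step 0 a) = hub.
Proof.
case/and3P: tab_rim_adjacencyP => /all_iotaP/(_ p)/has_iotaP[a /andP[va va0]] _ _.
by exists a; split; apply/eqP; rewrite ?k7_vertex_rim ?k7_hubE ?val_k7_step.
Qed.

Lemma k7_rim_adjacent p q : p != q ->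
  ~~ ((p == link_src) && (q == link_dst) || (p == link_dst) && (q == link_src)) ->
  exists a, [/\ k7_vertex a = rim p, k7_vertex (k7_step 0 a) = rim q & k7_volt 0 a = 0%R].
Proof.
rewrite -!val_eqE /= inordK // => pq not_link.
case/and3P: tab_rim_adjacencyP => _ /all_iotaP/(_ p)/all_iotaP/(_ q)/implyP + _.
rewrite pq not_link => /(_ isT)/has_iotaP[a /and3P[va va0 /eqP a0]].
by exists a; split; rewrite //; apply/eqP; rewrite k7_vertex_rim ?val_k7_step.
Qed.

Lemma k7_rim_link :
  exists a, [/\ k7_vertex a = rim link_src, k7_vertex (k7_step 0 a) = rim link_dst &
               k7_volt 0 a = 1%R].
Proof.
case/and3P: tab_rim_adjacencyP => _ _ /has_iotaP[a /and3P[va va0 /eqP a1]].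
by exists a; split; rewrite //; apply/eqP; rewrite k7_vertex_rim ?val_k7_step ?inordK.
Qed.

Definition ord_pair (y : 'I_84 * 'I_3) : nat * nat := (nat_of_ord y.1, nat_of_ord y.2).

Lemma ord_pair_inj : injective ord_pair.
Proof. by move=> [a i] [b j] [/val_inj-> /val_inj->]. Qed.

Definition k7_tau (y : 'I_84 * 'I_3) : 'I_84 * 'I_3 :=
  (inord (tab_tau (ord_pair y)).1, inord (tab_tau (ord_pair y)).2).

Lemma tab_tau_at y :
  [/\ (tab_tau (ord_pair y)).1 < 84, (tab_tau (ord_pair y)).2 < 3,
      tab_tau (tab_tau (ord_pair y)) = ord_pair y &
      forall j, j < 3 ->
        tab_tau (tab_trunc_step j (ord_pair y)) = tab_trunc_step j (tab_tau (ord_pair y)) /\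
        tab_trunc_volt j (tab_tau (ord_pair y)) = (- tab_trunc_volt j (ord_pair y))%R].
Proof.
case: y => a i; rewrite -[ord_pair (a, i)]/(nat_of_ord a, nat_of_ord i).
case/andP: tab_tau_symP => /all_iotaP/(_ a)/all_iotaP/(_ i) + _.
case/and4P=> -> -> /eqP-> /allP jP; split=> // j j_lt.
have j_in : j \in iota 0 3 by rewrite mem_iota.
by case/andP: (jP j j_in) => /eqP-> /eqP->.
Qed.

Lemma ord_pair_tau y : ord_pair (k7_tau y) = tab_tau (ord_pair y).
Proof.
by case: (tab_tau_at y) => lt84 lt3 _ _; rewrite /ord_pair /= !inordK // -surjective_pairing.
Qed.

Lemma ord_pair_trunc_step j y : ord_pair (trunc_step k7_step j y) = tab_trunc_step j (ord_pair y).
Proof.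
case: y => a [[|[|[|i]]] i_lt] //;
by case: j => [|[|j]]; rewrite /ord_pair /trunc_step /= ?val_k7_step ?inordK.
Qed.

Lemma trunc_voltE j y : trunc_volt k7_volt j y = tab_trunc_volt j (ord_pair y).
Proof. by case: y => a [[|[|[|i]]] i_lt] //; case: j => [|[|[|j]]]. Qed.

Lemma k7_tauK : involutive k7_tau.
Proof. by move=> y; apply: ord_pair_inj; rewrite !ord_pair_tau; case: (tab_tau_at y). Qed.

Lemma k7_tau_step j y : j < 3 ->
  k7_tau (trunc_step k7_step j y) = trunc_step k7_step j (k7_tau y).
Proof.
move=> j_lt; apply: ord_pair_inj.
rewrite ord_pair_tau !ord_pair_trunc_step ord_pair_tau.
by case: (tab_tau_at y) => _ _ _ /(_ j j_lt) [].
Qed.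

Lemma k7_tau_volt j y : j < 3 -> trunc_volt k7_volt j (k7_tau y) = (- trunc_volt k7_volt j y)%R.
Proof.
move=> j_lt; rewrite !trunc_voltE ord_pair_tau.
by case: (tab_tau_at y) => _ _ _ /(_ j j_lt) [].
Qed.

Lemma k7_tau_type : (k7_tau (ord0, ord0)).2 != ord0.
Proof. by rewrite -val_eqE /= inordK; case/andP: tab_tau_symP. Qed.

(** * The branched cover of K7 *)

Section K7Cover.
Variable n : nat.
Local Notation D := ('I_n.+1 * 'I_84)%type.
Local Notation r i := (@cover_step n _ k7_step k7_volt i).

Lemma r_invol i : i < 3 -> involutive (r i).
Proof. by move=> i_lt; apply: cover_stepK => a; [exact: k7_stepK | exact: k7_voltN]. Qed.

Lemma r_fpf i : i < 3 -> fpf_involution (r i).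
Proof. by move=> i_lt x; split; [exact: r_invol | exact/cover_step_fpf/k7_step_fpf]. Qed.

Lemma r02 x : r 0 (r 2 x) = r 2 (r 0 x).
Proof. by case: (k7_step02 x.2) => step02 _ volt02; exact: cover_step02. Qed.

Lemma k7_cover_is_map : is_map (r 0) (r 1) (r 2).
Proof.
split; first by rewrite card_prod !card_ord.
- by split; [|split]; apply: r_fpf.
- move=> x; split; first exact: r02.
  by case: (k7_step02 x.2) => _ fpf02 _; apply: contraNneq fpf02 => /(congr1 snd) /= ->.
- apply: (cover_connected (root := k7_vertex_flag hub) (word := root_word) (loop := hub_loop)).
  + by move=> i; apply: r_invol.
  + exact: root_word_sub.
  + exact: k7_root_word.
  + by apply/allP.
  + by case: k7_hub_loop.
  + by case: k7_hub_loop.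
Qed.

Lemma k7_cover_orientable : orientable (r 0) (r 1) (r 2).
Proof. exact: (@cover_orientable n _ _ _ (fun a : 'I_84 => tab_colour a) k7_colour_step). Qed.

Definition vlab (x : D) := orbit_label k7_vertex (pred1 hub) (fun=> 0%R) x.
Definition elab (x : D) := orbit_label k7_edge pred0 (fun a : 'I_84 => edge_pot a) x.
Definition flab (x : D) :=
  orbit_label k7_face (pred1 k7_branch_face) (fun a : 'I_84 => face_pot a) x.

Lemma vlab_step h x : h \in [:: 1; 2] -> vlab (r h x) = vlab x.
Proof.
apply: orbit_label_step => [|{}h a h12 rim_a]; first exact: k7_vertex_step.
by rewrite (k7_volt_rim h12 rim_a) addr0.
Qed.

Lemma elab_step h x : h \in [:: 0; 2] -> elab (r h x) = elab x.
Proof.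
by apply: orbit_label_step => [|{}h a h02 _]; [exact: k7_edge_step | exact: edge_pot_step].
Qed.

Lemma flab_step h x : h \in [:: 0; 1] -> flab (r h x) = flab x.
Proof.
by apply: orbit_label_step => [|{}h a h01]; [exact: k7_face_step | exact: face_pot_step].
Qed.

Lemma mem_vcls x y : (y \in vcls (r 1) (r 2) x) = (vlab x == vlab y).
Proof.
apply: (mem_orbit (flag := k7_vertex_flag) (word := vertex_word) (loop := fun=> hub_loop)).
- exact: k7_vertex_flagK.
- by [].
- by move=> h; rewrite !inE => /orP[] /eqP->; apply: r_invol.
- exact: k7_vertex_step.
- by move=> h a h12 rim_a; rewrite (k7_volt_rim h12 rim_a) addr0.
- exact: vertex_word_sub.
- exact: k7_vertex_word.
- by move=> c _; apply/allP.
- by move=> c /eqP->; case: k7_hub_loop.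
- by move=> c /eqP->; case: k7_hub_loop.
Qed.

Lemma mem_ecls x y : (y \in ecls (r 0) (r 2) x) = (elab x == elab y).
Proof.
apply: (mem_orbit (flag := k7_edge_flag) (word := edge_word) (loop := fun=> [::])) => //.
- exact: k7_edge_flagK.
- exact: edge_pot_flag.
- by move=> h; rewrite !inE => /orP[] /eqP->; apply: r_invol.
- exact: k7_edge_step.
- by move=> h a h02 _; exact: edge_pot_step.
- exact: edge_word_sub.
- exact: k7_edge_word.
Qed.

Lemma mem_fcls x y : (y \in fcls (r 0) (r 1) x) = (flab x == flab y).
Proof.
apply: (mem_orbit (flag := k7_face_flag) (word := face_word) (loop := fun=> face_loop)).
- exact: k7_face_flagK.
- exact: face_pot_flag.
- by move=> h; rewrite !inE => /orP[] /eqP->; apply: r_invol.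
- exact: k7_face_step.
- exact: face_pot_step.
- exact: face_word_sub.
- exact: k7_face_word.
- by move=> c _; apply/allP.
- by move=> c /eqP->; case: k7_face_loop.
- by move=> c /eqP->; case: k7_face_loop.
Qed.

Lemma card_verts : #|verts (r 1) (r 2)| = (n.+1 * 6).+1.
Proof. by rewrite (card_orbits k7_vertex_flagK (fun=> erefl) mem_vcls) card1 cardC1 card_ord. Qed.

Lemma card_edges : #|edges (r 0) (r 2)| = n.+1 * 21.
Proof.
rewrite (card_orbits k7_edge_flagK edge_pot_flag mem_ecls) card0.
by rewrite (eq_card (B := predT)) // cardT size_enum_ord.
Qed.

Lemma card_faces : #|faces (r 0) (r 1)| = (n.+1 * 13).+1.
Proof. by rewrite (card_orbits k7_face_flagK face_pot_flag mem_fcls) card1 cardC1 card_ord. Qed.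

Lemma k7_cover_genus : has_genus (r 0) (r 1) (r 2) n.+1.
Proof.
split; first exact: k7_cover_orientable.
by have := card_verts; have := card_edges; have := card_faces; rewrite /euler_char; lia.
Qed.

Lemma vcls_eq x y : (vcls (r 1) (r 2) x == vcls (r 1) (r 2) y) = (vlab x == vlab y).
Proof. exact: cls_eqE mem_vcls x y. Qed.
Lemma ecls_eq x y : (ecls (r 0) (r 2) x == ecls (r 0) (r 2) y) = (elab x == elab y).
Proof. exact: cls_eqE mem_ecls x y. Qed.
Lemma fcls_eq x y : (fcls (r 0) (r 1) x == fcls (r 0) (r 1) y) = (flab x == flab y).
Proof. exact: cls_eqE mem_fcls x y. Qed.

Lemma vlab_vertex x y : vlab x = vlab y -> k7_vertex x.2 = k7_vertex y.2.
Proof. exact: orbit_label_cls. Qed.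
Lemma flab_face x y : flab x = flab y -> k7_face x.2 = k7_face y.2.
Proof. exact: orbit_label_cls. Qed.

Lemma vlab_hub x : k7_vertex x.2 = hub -> vlab x = inl hub.
Proof. by rewrite /vlab /orbit_label => ->; rewrite -[pred1 hub hub]/(hub == hub) eqxx. Qed.
Lemma vlab_rim x : k7_vertex x.2 != hub -> vlab x = inr (x.1, k7_vertex x.2).
Proof. by rewrite /vlab /orbit_label /= => /negbTE->; rewrite zp0 subr0. Qed.
Lemma elabE x : elab x = inr (x.1 - zp (edge_pot x.2), k7_edge x.2)%R.
Proof. by []. Qed.
Lemma flab_branch x : k7_face x.2 = k7_branch_face -> flab x = inl k7_branch_face.
Proof.
by rewrite /flab /orbit_label => ->; rewrite -[pred1 _ _]/(k7_branch_face == k7_branch_face) eqxx.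
Qed.
Lemma flab_unbranched x : k7_face x.2 != k7_branch_face ->
  flab x = inr (x.1 - zp (face_pot x.2), k7_face x.2)%R.
Proof. by rewrite /flab /orbit_label /= => /negbTE->. Qed.

Lemma r0_rim x : k7_vertex x.2 = hub -> k7_vertex (r 0 x).2 != hub.
Proof. by move=> <-; exact: k7_r0_vertex. Qed.

Lemma elab_of_ends x y : vlab x = vlab y -> vlab (r 0 x) = vlab (r 0 y) -> elab x = elab y.
Proof.
wlog x_rim : x y / k7_vertex x.2 != hub.
  move=> rim_case vxy v0xy; have [x_hub|x_rim] := eqVneq (k7_vertex x.2) hub; last exact: rim_case.
  rewrite -(elab_step x (_ : 0 \in [:: 0; 2])) // -(elab_step y (_ : 0 \in [:: 0; 2])) //.
  by apply: rim_case; rewrite ?r_invol // r0_rim.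
move=> vxy v0xy; have y_rim : k7_vertex y.2 != hub by rewrite -(vlab_vertex vxy).
have [exy /(_ x_rim) pxy] := k7_edge_ends (vlab_vertex vxy) (vlab_vertex v0xy).
by move: vxy; rewrite (vlab_rim x_rim) (vlab_rim y_rim) !elabE exy pxy => -[->].
Qed.

Lemma k7_cover_simple : simple_graph (r 0) (r 1) (r 2).
Proof.
split=> [x|x y /eqP + /eqP].
  by rewrite vcls_eq; apply: contra (k7_r0_vertex x.2) => /eqP/vlab_vertex/eqP.
by rewrite !vcls_eq => /eqP vxy /eqP v0xy; apply/eqP; rewrite ecls_eq; apply/eqP/elab_of_ends.
Qed.

Definition hub_vertex : {set D} := vcls (r 1) (r 2) (0%R, k7_vertex_flag hub).
Definition rim_vertex (P : 'I_n.+1 * 'I_6) : {set D} :=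
  vcls (r 1) (r 2) (P.1, k7_vertex_flag (rim P.2)).

Lemma rim_neq_hub p : rim p != hub.
Proof. by rewrite eq_sym neq_lift. Qed.

Lemma vlab_hub_vertex : vlab (0%R, k7_vertex_flag hub) = inl hub.
Proof. by apply: vlab_hub; rewrite /= k7_vertex_flagK. Qed.

Lemma vlab_rim_vertex P : vlab (P.1, k7_vertex_flag (rim P.2)) = inr (P.1, rim P.2).
Proof. by rewrite vlab_rim /= k7_vertex_flagK ?rim_neq_hub. Qed.

Lemma verts_cases u : u \in verts (r 1) (r 2) -> u = hub_vertex \/ exists P, u = rim_vertex P.
Proof.
case/imsetP=> x _ ->; have [x_hub|x_rim] := eqVneq (k7_vertex x.2) hub.
  by left; apply/eqP; rewrite vcls_eq vlab_hub_vertex vlab_hub.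
case: (unliftP hub (k7_vertex x.2)) x_rim => [p x_p _|<-]; last by rewrite eqxx.
by right; exists (x.1, p); apply/eqP; rewrite vcls_eq vlab_rim_vertex vlab_rim // x_p.
Qed.

Lemma hub_vertex_in : hub_vertex \in verts (r 1) (r 2).
Proof. exact: imset_f. Qed.
Lemma rim_vertex_in P : rim_vertex P \in verts (r 1) (r 2).
Proof. exact: imset_f. Qed.

Lemma rim_vertex_neq_hub P : rim_vertex P != hub_vertex.
Proof. by rewrite vcls_eq vlab_rim_vertex vlab_hub_vertex. Qed.

Lemma rim_vertex_eq P Q : (rim_vertex P == rim_vertex Q) = (P == Q).
Proof.
rewrite vcls_eq !vlab_rim_vertex -sum_eqE /= xpair_eqE (inj_eq lift_inj).
by rewrite -xpair_eqE -!surjective_pairing.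
Qed.

Lemma adj_sym u w : adj (r 0) u w = adj (r 0) w u.
Proof.
suff adj_sym u' w' : adj (r 0) u' w' -> adj (r 0) w' u' by apply/idP/idP; apply: adj_sym.
rewrite /adj => /andP[uw /existsP[z /andP[zu z0w]]]; rewrite eq_sym uw.
by apply/existsP; exists (r 0 z); rewrite z0w r_invol.
Qed.

Lemma adj_of_flag x y z : vlab x != vlab y -> vlab z = vlab x -> vlab (r 0 z) = vlab y ->
  adj (r 0) (vcls (r 1) (r 2) x) (vcls (r 1) (r 2) y).
Proof.
move=> xy zx z0y; rewrite /adj vcls_eq xy; apply/existsP; exists z.
by rewrite !mem_vcls zx z0y !eqxx.
Qed.

Lemma adj_rim_hub P : adj (r 0) (rim_vertex P) hub_vertex.
Proof.
have [a [a_p a0_hub]] := k7_hub_adjacent P.2.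
apply: (adj_of_flag (z := (P.1, a))); first by rewrite vlab_rim_vertex vlab_hub_vertex.
  by rewrite vlab_rim_vertex vlab_rim /= a_p ?rim_neq_hub.
by rewrite vlab_hub_vertex vlab_hub.
Qed.

Lemma adj_rim_sheet k p q : p != q ->
  ~~ ((p == link_src) && (q == link_dst) || (p == link_dst) && (q == link_src)) ->
  adj (r 0) (rim_vertex (k, p)) (rim_vertex (k, q)).
Proof.
move=> pq not_link; have [a [a_p a0_q a0]] := k7_rim_adjacent pq not_link.
apply: (adj_of_flag (z := (k, a))).
- by rewrite -vcls_eq rim_vertex_eq xpair_eqE eqxx.
- by rewrite vlab_rim_vertex vlab_rim /= a_p ?rim_neq_hub.
- by rewrite vlab_rim_vertex cover_stepE a0 zp0 addr0 vlab_rim /= a0_q ?rim_neq_hub.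
Qed.

Lemma adj_rim_link k : adj (r 0) (rim_vertex (k, link_src)) (rim_vertex (k + zp 1, link_dst))%R.
Proof.
have [a [a_src a0_dst a1]] := k7_rim_link.
apply: (adj_of_flag (z := (k, a))).
- by rewrite -vcls_eq rim_vertex_eq xpair_eqE (negbTE link_src_neq_dst) andbF.
- by rewrite vlab_rim_vertex vlab_rim /= a_src ?rim_neq_hub.
- by rewrite vlab_rim_vertex cover_stepE a1 vlab_rim /= a0_dst ?rim_neq_hub.
Qed.

Lemma k7_cover_three_connected : three_connected (r 0) (r 1) (r 2).
Proof.
split; first by rewrite card_verts; lia.
move=> S S_le2 u w /setDP[u_in u_S] /setDP[w_in w_S].
set e := fun a b =>
  [&& a \in verts (r 1) (r 2) :\: S, b \in verts (r 1) (r 2) :\: S & adj (r 0) a b].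
have e_sym : symmetric e by move=> a b; rewrite /e adj_sym andbA andbCA -andbA.
have [hub_S|hub_S] := boolP (hub_vertex \in S); last first.
  have to_hub v : v \in verts (r 1) (r 2) -> v \notin S -> connect e v hub_vertex.
    move=> v_in; case: (verts_cases v_in) => [->|[P ->]] v_S; first exact: connect0.
    by apply: connect1; rewrite /e !in_setD v_S hub_S rim_vertex_in hub_vertex_in adj_rim_hub.
  by apply: connect_trans (to_hub u u_in u_S) _; rewrite (sym_connect_sym e_sym) to_hub.
case: (verts_cases u_in) u_S => [->|[P ->]] u_S; first by rewrite hub_S in u_S.
case: (verts_cases w_in) w_S => [->|[Q ->]] w_S; first by rewrite hub_S in w_S.
have one_bad P' Q' : ~~ (rim_vertex P' \notin S) -> ~~ (rim_vertex Q' \notin S) -> P' = Q'.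
  move=> /negbNE P'_S /negbNE Q'_S; apply/eqP/negPn/negP => P'Q'.
  have : hub_vertex |: [set rim_vertex P'; rim_vertex Q'] \subset S.
    by apply/subsetP => z; rewrite !inE => /or3P[] /eqP->.
  move/subset_leq_card; rewrite cardsU1 cards2 !inE negb_or !(eq_sym hub_vertex).
  rewrite !rim_vertex_neq_hub rim_vertex_eq P'Q' /=.
  by move=> /leq_trans/(_ S_le2).
have := connect_good (m := 6) isT link_src_neq_dst
  (e := fun P' Q' => adj (r 0) (rim_vertex P') (rim_vertex Q')) (fun _ _ => adj_sym _ _)
  (@adj_rim_sheet) adj_rim_link one_bad u_S w_S.
apply: connect_homo => P' Q' /and3P[P'_S Q'_S PQ'].
by rewrite /e !in_setD P'_S Q'_S !rim_vertex_in.
Qed.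

Lemma flab_branched x y : k7_face x.2 = k7_branch_face -> k7_face y.2 = k7_branch_face ->
  flab x = flab y.
Proof. by move=> /flab_branch-> /flab_branch->. Qed.

Lemma corner_vertex x y : flab x = flab y -> k7_face x.2 != k7_branch_face ->
  k7_vertex x.2 = k7_vertex y.2 -> vlab x = vlab y.
Proof.
move=> fxy x_unbr vxy; have [x_hub|x_rim] := eqVneq (k7_vertex x.2) hub.
  by rewrite !vlab_hub // -vxy.
have y_rim : k7_vertex y.2 != hub by rewrite -vxy.
have := orbit_label_sheet fxy x_unbr.
rewrite /= (face_pot_corner (flab_face fxy) x_unbr vxy x_rim) => /addIr x1y1.
by rewrite !vlab_rim // x1y1 vxy.
Qed.

Lemma corner_face x y : vlab x = vlab y -> k7_vertex x.2 != hub ->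
  k7_face x.2 = k7_face y.2 -> k7_face x.2 != k7_branch_face -> flab x = flab y.
Proof.
move=> vxy x_rim fxy x_unbr; have y_unbr : k7_face y.2 != k7_branch_face by rewrite -fxy.
have := orbit_label_sheet vxy x_rim; rewrite /= zp0 !subr0 => x1y1.
by rewrite !flab_unbranched // x1y1 fxy (face_pot_corner fxy x_unbr (vlab_vertex vxy) x_rim).
Qed.

Lemma cover_shared_edge (p1 p3 q1 q3 : D) :
  vlab p1 = vlab q1 -> vlab p3 = vlab q3 -> flab p1 = flab p3 -> flab q1 = flab q3 ->
  flab p1 != flab q1 -> vlab p1 != vlab p3 -> k7_face p1.2 != k7_branch_face ->
  exists z,
    [/\ vlab z = vlab p1, vlab (r 0 z) = vlab p3, flab z = flab p1 & flab (r 2 z) = flab q1].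
Proof.
move=> V1 V3 F1 F3 Fne Vne p1_unbr.
have vv1 := vlab_vertex V1; have vv3 := vlab_vertex V3.
have ff1 := flab_face F1; have ff3 := flab_face F3.
have vert_ne : k7_vertex p1.2 != k7_vertex p3.2.
  by apply: contraNneq Vne => v13; apply/eqP/corner_vertex.
have face_ne : k7_face p1.2 != k7_face q1.2.
  apply: contraNneq Fne => f11; apply/eqP; have [p1_hub|p1_rim] := eqVneq (k7_vertex p1.2) hub.
    have p3_rim : k7_vertex p3.2 != hub by rewrite -p1_hub eq_sym.
    by rewrite F1 F3; apply: corner_face; rewrite // -?ff1 // -ff3 -f11.
  exact: corner_face.
have [a [va va0 fa fa2]] := @k7_shared_edge p1.2 q3.2 q1.2 p3.2
  ltac:(by rewrite -vv3) ltac:(by rewrite -ff3) ltac:(by rewrite -vv1) ltac:(by rewrite ff3)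
  ltac:(by rewrite -vv3) ltac:(by rewrite -ff1).
pose k := (p1.1 - zp (face_pot p1.2) + zp (face_pot a))%R.
have a_unbr : k7_face a != k7_branch_face by rewrite fa.
have Fz : flab (k, a) = flab p1 by rewrite !flab_unbranched //= fa addrK.
have Vz : vlab (k, a) = vlab p1 by apply: corner_vertex; rewrite //= va.
have Vz0 : vlab (r 0 (k, a)) = vlab p3.
  apply: corner_vertex; first by rewrite flab_step // Fz F1.
    by rewrite cover_stepE /= k7_face_step.
  by rewrite cover_stepE /= va0 vv3.
exists (k, a); split=> //.
have [q1_br|q1_unbr] := eqVneq (k7_face q1.2) k7_branch_face.
  by apply: flab_branched; rewrite // cover_stepE /= fa2 -ff3.
have [p1_hub|p1_rim] := eqVneq (k7_vertex p1.2) hub; last first.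
  apply: corner_face.
  - by rewrite vlab_step // Vz V1.
  - by rewrite cover_stepE /= k7_vertex_step // va.
  - by rewrite cover_stepE /= fa2 -ff3.
  - by rewrite cover_stepE /= fa2 -ff3.
have p3_rim : k7_vertex p3.2 != hub by rewrite -p1_hub eq_sym.
have f20 : k7_face (k7_step 2 (k7_step 0 a)) = k7_face q3.2.
  by case: (k7_step02 a) => <- _ _; rewrite k7_face_step.
rewrite -(flab_step (r 2 (k, a)) (_ : 0 \in [:: 0; 1])) // r02 F3.
apply: corner_face.
- by rewrite (vlab_step _ (_ : 2 \in [:: 1; 2])) // Vz0 V3.
- by rewrite !cover_stepE /= k7_vertex_step // va0 -vv3.
- by rewrite !cover_stepE /= f20.
- by rewrite !cover_stepE /= f20 -ff3.
Qed.

Lemma cover_shared_edge_sym (p1 p3 q1 q3 : D) :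
  vlab p1 = vlab q1 -> vlab p3 = vlab q3 -> flab p1 = flab p3 -> flab q1 = flab q3 ->
  flab p1 != flab q1 -> vlab p1 != vlab p3 ->
  exists z, [/\ vlab z = vlab p1, vlab (r 0 z) = vlab p3 &
    flab z = flab p1 /\ flab (r 2 z) = flab q1 \/ flab z = flab q1 /\ flab (r 2 z) = flab p1].
Proof.
move=> V1 V3 F1 F3 Fne Vne.
have [p1_br|p1_unbr] := eqVneq (k7_face p1.2) k7_branch_face; last first.
  have [z [Vz Vz0 Fz Fz2]] := cover_shared_edge V1 V3 F1 F3 Fne Vne p1_unbr.
  by exists z; split=> //; left.
have q1_unbr : k7_face q1.2 != k7_branch_face.
  by apply: contraNneq Fne => q1_br; apply/eqP/flab_branched.
have [z [Vz Vz0 Fz Fz2]] := cover_shared_edge (esym V1) (esym V3) F3 F1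
  ltac:(by rewrite eq_sym) ltac:(by rewrite -V1 -V3) q1_unbr.
by exists z; split; [rewrite Vz V1 | rewrite Vz0 V3 | right].
Qed.

Lemma k7_cover_faces_meet : faces_meet_connected (r 0) (r 1) (r 2).
Proof.
move=> x y xy CV CE u w u_in w_in.
have corners v : v \in CV -> exists p, [/\ v = vcls (r 1) (r 2) p,
    exists2 p1, vlab p1 = vlab p & flab p1 = flab x &
    exists2 q1, vlab q1 = vlab p & flab q1 = flab y].
  rewrite inE => /and3P[/imsetP[p _ ->] /set0Pn[p1 /setIP[p1_v p1_x]]].
  move=> /set0Pn[q1 /setIP[q1_v q1_y]].
  by exists p; split=> //; [exists p1 | exists q1];
    apply/esym/eqP; rewrite -?mem_vcls -?mem_fcls.
have [p [u_p [p1 V1 F1] [q1 W1 G1]]] := corners u u_in.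
have [p' [w_p' [p3 V3 F3] [q3 W3 G3]]] := corners w w_in.
have [pp'|pp'] := eqVneq (vlab p) (vlab p').
  by have -> : u = w by rewrite u_p w_p'; apply/eqP; rewrite vcls_eq pp'.
have [z [Vz Vz0 Fz]] := @cover_shared_edge_sym p1 p3 q1 q3
  ltac:(by rewrite V1 W1) ltac:(by rewrite V3 W3) ltac:(by rewrite F1 F3) ltac:(by rewrite G1 G3)
  ltac:(by rewrite F1 G1 -fcls_eq) ltac:(by rewrite V1 V3).
have edge_face f : (flab z == flab f) || (flab (r 2 z) == flab f) ->
    ecls (r 0) (r 2) z :&: fcls (r 0) (r 1) f != set0.
  case/orP=> /eqP zf; apply/set0Pn; [exists z | exists (r 2 z)];
  by rewrite inE mem_ecls mem_fcls ?elab_step // zf !eqxx.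
apply: connect1; rewrite u_in w_in /=; apply/existsP; exists (ecls (r 0) (r 2) z).
rewrite inE imset_f //= !edge_face /=; last 2 first.
- by case: Fz => -[-> ->]; rewrite F1 G1 eqxx ?orbT.
- by case: Fz => -[-> ->]; rewrite F1 G1 eqxx ?orbT.
apply/existsP; exists z; rewrite mem_ecls eqxx u_p w_p' !mem_vcls Vz Vz0 V1 V3.
by rewrite !eqxx.
Qed.

Lemma k7_cover_trunc_aut_lt :
  #|map_aut (r 0) (r 1) (r 2)| <
  #|map_aut (trunc_r0 (r 0) (r 1)) (trunc_r1 (r 2)) (trunc_r2 (r 2))|.
Proof.
apply: (card_map_aut_lt_trunc (z := ((0%R, ord0), ord0))
  (trunc_cover_perm_aut n k7_tauK k7_tau_step k7_tau_volt)).
by rewrite permE; exact: k7_tau_type.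
Qed.

End K7Cover.

Definition k7_cover_flags (n : nat) : finType := ('I_n.+1 * 'I_84)%type.

Theorem lemma9 (g : nat) : (1 <= g)%N ->
  exists (D : finType) (r0 r1 r2 : D -> D),
    [/\ polyhedral_map r0 r1 r2, has_genus r0 r1 r2 g &
        (#|map_aut r0 r1 r2| <
         #|map_aut (trunc_r0 r0 r1) (trunc_r1 r2) (trunc_r2 r2)|)%N].
Proof.
case: g => [//|n] _.
exists (k7_cover_flags n), (cover_step k7_step k7_volt 0), (cover_step k7_step k7_volt 1),
  (cover_step k7_step k7_volt 2).
split; last exact: k7_cover_trunc_aut_lt.
- split; [exact: k7_cover_is_map | exact: k7_cover_simple | exact: k7_cover_three_connected |
          exact: k7_cover_faces_meet].
- exact: k7_cover_genus.
Qed.
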